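(* Let $G$ be a connected graph and $U \subseteq V(G)$ an uncountable set of vertices such that every $U$-rooted minor of $G$ with countable branch sets has countable colouring number. Let $(T,\mathcal V)$ be a slim $U$-rooted normal semi-partition tree of $G$ with $U \subseteq V(G(T))$, and let $\kappa = |T|$. Then $T$ can be written as a continuous increasing union $T=\bigcup_{i<\mathrm{cf}(\kappa)} T_i$ of infinite rooted subtrees $T_i$ with $|T_i|<|T|$ such that every $G(T_i)$ has finite adhesion in $G$ towards $U$.
   Context: Minors are given by disjoint connected branch sets; a minor is $U$-rooted if every branch set meets $U$. A graph has countable colouring number if its vertices admit a well-order in which each vertex is preceded by only finitely many of its neighbours. An order tree is a poset with unique minimal element in which every down-closure $\lceil t\rceil$ is well-ordered; $\mathring{\lceil t\rceil}=\lceil t\rceil\setminus\{t\}$; height of $t$ = order type of $\mathring{\lceil t\rceil}$; rooted subtree = down-closed subset. A $T$-graph is a graph on $T$ with comparable endvertices on every edge and with lower neighbours of each $t$ cofinal in $\mathring{\lceil t\rceil}$. $(T,(V_t)_{t\in T})$ with nonempty $V_t\subseteq V(G)$ is a normal semi-partition tree if the $V_t$ are pairwise disjoint, each $G[V_t]$ is connected, contracting each $V_t$ in $G[\bigcup_t V_t]$ gives a $T$-graph, and for every path in $G$ with at least one edge, endvertices in $V_t$ and $V_{t'}$, inner vertices outside $\bigcup V_s$ and no edges inside $G[\bigcup V_s]$, $t$ and $t'$ are comparable. It is slim if $|V_t|\le|\mathrm{height}(t)|+\aleph_0$, and $U$-rooted if every $V_t$ meets $U$. $G(S)=G[\bigcup_{t\in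 S}V_t]$. An induced subgraph $H$ has finite adhesion in $G$ towards $U$ if every component of $G-H$ containing a vertex of $U$ has only finitely many neighbours in $H$. Continuous means $T_\ell=\bigcup_{i<\ell}T_i$ for limit $\ell$. *)

From Stdlib Require Import List.
Import ListNotations.

Definition card_le {X Y : Type} (A : X -> Prop) (B : Y -> Prop) : Prop :=
  exists f : X -> Y, (forall x, A x -> B (f x)) /\
                     (forall x y, A x -> A y -> f x = f y -> x = y).
Definition card_lt {X Y : Type} (A : X -> Prop) (B : Y -> Prop) : Prop :=
  card_le A B /\ ~ card_le B A.
Definition card_eq {X Y : Type} (A : X -> Prop) (B : Y -> Prop) : Prop :=
  card_le A B /\ card_le B A.
Definition finite_set {X : Type} (A : X -> Prop) : Prop :=
  exists l : list X, forall x, A x -> In x l.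
Definition countable_set {X : Type} (A : X -> Prop) : Prop :=
  card_le A (fun _ : nat => True).

Definition well_order_on {X : Type} (A : X -> Prop) (R : X -> X -> Prop) : Prop :=
  (forall x, A x -> ~ R x x) /\
  (forall x y z, A x -> A y -> A z -> R x y -> R y z -> R x z) /\
  (forall x y, A x -> A y -> x = y \/ R x y \/ R y x) /\
  (forall S : X -> Prop, (forall x, S x -> A x) -> (exists x, S x) ->
     exists m, S m /\ forall y, S y -> y = m \/ R m y).

Definition simple_graph {V : Type} (adj : V -> V -> Prop) : Prop :=
  (forall x y, adj x y -> adj y x) /\ (forall x, ~ adj x x).

(* x :: l is a walk (consecutive vertices related by R) *)
Fixpoint walk {V : Type} (R : V -> V -> Prop) (x : V) (l : list V) : Prop :=
  match l with
  | [] => True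
  | y :: l' => R x y /\ walk R y l'
  end.

Definition connected_in {V : Type} (adj : V -> V -> Prop) (X : V -> Prop) : Prop :=
  forall x y, X x -> X y ->
    exists l, walk adj x l /\ last l x = y /\ Forall X l.

Definition graph_connected {V : Type} (adj : V -> V -> Prop) : Prop :=
  connected_in adj (fun _ => True).

Definition countable_colouring_number {W : Type} (P : W -> Prop)
  (adjH : W -> W -> Prop) : Prop :=
  exists R : W -> W -> Prop, well_order_on P R /\
    forall w, P w -> finite_set (fun w' => P w' /\ adjH w w' /\ R w' w).

Definition branch_sets {V : Type} (adj : V -> V -> Prop)
  (Bs : (V -> Prop) -> Prop) : Prop :=
  (forall X, Bs X -> exists x, X x) /\
  (forall X Y x, Bs X -> Bs Y -> X <> Y -> X x -> Y x -> False) /\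
  (forall X, Bs X -> connected_in adj X).

(* the minor given by the branch sets: vertices are the branch sets, two are
   adjacent iff G has an edge between them *)
Definition minor_adj {V : Type} (adj : V -> V -> Prop) (X Y : V -> Prop) : Prop :=
  X <> Y /\ exists x y, X x /\ Y y /\ adj x y.

Definition rooted_branch_sets {V : Type} (U : V -> Prop)
  (Bs : (V -> Prop) -> Prop) : Prop :=
  forall X, Bs X -> exists x, X x /\ U x.

Definition tlt {T : Type} (le : T -> T -> Prop) (s t : T) : Prop := le s t /\ s <> t.

Definition order_tree {T : Type} (le : T -> T -> Prop) : Prop :=
  (forall t, le t t) /\
  (forall s t, le s t -> le t s -> s = t) /\
  (forall r s t, le r s -> le s t -> le r t) /\
  (exists r, (forall s, le s r -> s = r) /\
             forall m, (forall s, le s m -> s = m) -> m = r) /\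
  (forall t, well_order_on (fun s => le s t) (tlt le)).

Definition rooted_subtree {T : Type} (le : T -> T -> Prop) (S : T -> Prop) : Prop :=
  forall s t, S t -> le s t -> S s.

Definition T_graph {T : Type} (le : T -> T -> Prop) (e : T -> T -> Prop) : Prop :=
  (forall s t, e s t -> le s t \/ le t s) /\
  (forall s t, tlt le s t -> exists u, le s u /\ tlt le u t /\ e u t).

(* vertex set of G(S) *)
Definition parts_union {T V : Type} (Vt : T -> V -> Prop) (S : T -> Prop) (x : V) : Prop :=
  exists t, S t /\ Vt t x.

Definition normal_semi_partition_tree {T V : Type} (adj : V -> V -> Prop)
  (le : T -> T -> Prop) (Vt : T -> V -> Prop) : Prop :=
  let inU := parts_union Vt (fun _ => True) in
  (forall t, exists x, Vt t x) /\
  (forall s t x, Vt s x -> Vt t x -> s = t) /\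
  (forall t, connected_in adj (Vt t)) /\
  T_graph le (fun s t => s <> t /\ exists x y, Vt s x /\ Vt t y /\ adj x y) /\
  (forall (x : V) (l : list V) (t t' : T),
      l <> [] -> NoDup (x :: l) ->
      walk (fun a b => adj a b /\ ~ (inU a /\ inU b)) x l ->
      Vt t x -> Vt t' (last l x) ->
      Forall (fun w => ~ inU w) (removelast l) ->
      le t t' \/ le t' t).

(* slim: |V_t| <= |height(t)| + aleph_0, where |height(t)| is the cardinality
   of the strict down-closure of t *)
Definition slim {T V : Type} (le : T -> T -> Prop) (Vt : T -> V -> Prop) : Prop :=
  forall t, card_le (Vt t)
    (fun z : T + nat => match z with inl s => tlt le s t | inr _ => True end).

Definition rooted_parts {T V : Type} (U : V -> Prop) (Vt : T -> V -> Prop) : Prop :=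
  forall t, exists x, Vt t x /\ U x.

Definition reach_avoiding {V : Type} (adj : V -> V -> Prop) (X : V -> Prop) (u z : V) : Prop :=
  exists l, walk adj u l /\ last l u = z /\ Forall (fun w => ~ X w) l.

Definition finite_adhesion_towards {V : Type} (adj : V -> V -> Prop)
  (X U : V -> Prop) : Prop :=
  forall u, U u -> ~ X u ->
    finite_set (fun y => X y /\ exists z, reach_avoiding adj X u z /\ adj z y).

Definition strictly_increasing {I K : Type} (ltI : I -> I -> Prop)
  (ltK : K -> K -> Prop) (f : I -> K) : Prop :=
  forall i j, ltI i j -> ltK (f i) (f j).

Definition cofinal_in {K : Type} (ltK : K -> K -> Prop) (C : K -> Prop) : Prop :=
  forall k, exists c, C c /\ (k = c \/ ltK k c).

Definition initial_ordinal_of {K X : Type} (ltK : K -> K -> Prop) (A : X -> Prop) : Prop :=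
  well_order_on (fun _ => True) ltK /\
  card_eq (fun _ : K => True) A /\
  forall k, card_lt (fun y => ltK y k) (fun _ : K => True).

(* (I, ltI) has order type cf(K): it is isomorphic to a cofinal subset of K
   (via a strictly increasing map with cofinal image) and its order type is at
   most that of every cofinal subset of K *)
Definition cofinality_order {I K : Type} (ltI : I -> I -> Prop)
  (ltK : K -> K -> Prop) : Prop :=
  well_order_on (fun _ => True) ltI /\
  (exists f : I -> K, strictly_increasing ltI ltK f /\
                      cofinal_in ltK (fun k => exists i, f i = k)) /\
  (forall C : K -> Prop, cofinal_in ltK C ->
     exists g : I -> K, strictly_increasing ltI ltK g /\ forall i, C (g i)).

Definition is_limit {I : Type} (ltI : I -> I -> Prop) (l : I) : Prop :=
  (exists i, ltI i l) /\ forall i, ltI i l -> exists j, ltI i j /\ ltI j l.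

(* Applied to the minor whose branch sets are the parts [V_t], the colouring hypothesis rules
   out an uncountable chain of nodes each adjacent to cofinally many of its predecessors; hence
   every node has countable height, every part is countable by slimness, and [T] is uncountable.
   Applied to a minor built from the components of [G - G(⌈p⌉)], it shows that a node [p] has
   only countably many bad children [t]: those whose component of [G - G(⌈̊t⌉)] containing
   [V_t] has infinitely many neighbours in [G(⌈̊t⌉)].
   Fix a well-order of the parts in which each part has only finitely many earlier neighbours,
   and close sets of nodes under predecessors, earlier neighbouring parts and bad children.
   Every node has countably many such successors, so closures of sets of size [< |T|] stay
   small. A closed set has finite adhesion towards [U], because a minimal node outside it is
   not bad: a successor node would be a bad child of its predecessor, and a limit node has
   infinitely many neighbouring parts below it, one of which is coloured after it. Closing a
   countably infinite set together with the first [f i'] nodes ([i' < i]), for a cofinal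
   [f : cf(κ) -> κ], gives [T_i]. *)

From Stdlib Require Import List Arith Lia Classical ClassicalEpsilon FunctionalExtensionality
  PropExtensionality ProofIrrelevance Cantor.
From mathcomp Require ssreflect ssrbool eqtype boolp classical_sets wochoice.
Import ListNotations.

(** * Countable and finite sets *)

Lemma choice_on {X Y : Type} (A : X -> Prop) (R : X -> Y -> Prop) :
  inhabited Y -> (forall x, A x -> exists y, R x y) ->
  exists f : X -> Y, forall x, A x -> R x (f x).
Proof.
  intros [y0] H.
  assert (H' : forall x, exists y, A x -> R x y).
  { intro x. destruct (classic (A x)) as [Ax|nAx].
    - destruct (H x Ax) as [y Hy]. exists y. auto.
    - exists y0. intro; contradiction. }
  destruct (choice _ H') as [f Hf]. exists f. auto.
Qed.

Lemma card_le_refl {X} (A : X -> Prop) : card_le A A.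
Proof. exists (fun x => x). split; auto. Qed.

Lemma card_le_trans {X Y Z} (A : X -> Prop) (B : Y -> Prop) (C : Z -> Prop) :
  card_le A B -> card_le B C -> card_le A C.
Proof.
  intros [f [Hf1 Hf2]] [g [Hg1 Hg2]]. exists (fun x => g (f x)). split; [now auto|].
  intros x y Ax Ay E. apply Hf2; auto.
Qed.

Lemma card_le_sub {X} (A B : X -> Prop) : (forall x, A x -> B x) -> card_le A B.
Proof. intros H. exists (fun x => x). split; auto. Qed.

Lemma countable_sub {X} (A B : X -> Prop) :
  (forall x, A x -> B x) -> countable_set B -> countable_set A.
Proof. intros H C. eapply card_le_trans; [apply card_le_sub|]; eauto. Qed.

Lemma countable_empty {X} (A : X -> Prop) : ~ (exists x, A x) -> countable_set A.
Proof. intros H. exists (fun _ => 0). split; [auto|]. intros x y Ax. exfalso; eauto. Qed.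

Lemma countable_singleton {X} (a : X) : countable_set (fun x => x = a).
Proof. exists (fun _ => 0). split; [auto|]. intros x y -> ->. auto. Qed.

Lemma countable_nat (A : nat -> Prop) : countable_set A.
Proof. exists (fun n => n). split; auto. Qed.

Fixpoint code_list (l : list nat) : nat :=
  match l with [] => 0 | a :: l' => S (to_nat (a, code_list l')) end.

Lemma code_list_inj l l' : code_list l = code_list l' -> l = l'.
Proof.
  revert l'; induction l as [|a l IH]; intros [|b l'] E; try discriminate; auto.
  apply eq_add_S, to_nat_inj in E. injection E as -> E. f_equal. auto.
Qed.

Lemma countable_union {I X : Type} (D : I -> Prop) (F : I -> X -> Prop) :
  countable_set D -> (forall i, D i -> countable_set (F i)) ->
  countable_set (fun x => exists i, D i /\ F i x).
Proof.
  intros [g [_ Hg]] HF.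
  destruct (classic (exists x i, D i /\ F i x)) as [[x0 [i0 _]]|Hn]; [|now apply countable_empty].
  destruct (choice_on D (fun i (h : X -> nat) => forall x y, F i x -> F i y -> h x = h y -> x = y))
    as [h Hh].
  { constructor. exact (fun _ => 0). }
  { intros i Di. destruct (HF i Di) as [h [_ Hh]]. eauto. }
  destruct (choice_on (fun x => exists i, D i /\ F i x) (fun x i => D i /\ F i x)) as [idx Hidx];
    [constructor; exact i0|auto|].
  exists (fun x => to_nat (g (idx x), h (idx x) x)). split; [now auto|].
  intros x y Hx Hy E. apply to_nat_inj in E. injection E as E1 E2.
  destruct (Hidx x Hx) as [Dx Fx], (Hidx y Hy) as [Dy Fy].
  assert (Ei : idx x = idx y) by (apply Hg; auto).
  rewrite Ei in E2, Fx. apply (Hh (idx y)); auto.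
Qed.

Lemma countable_union2 {X} (A B : X -> Prop) :
  countable_set A -> countable_set B -> countable_set (fun x => A x \/ B x).
Proof.
  intros CA CB.
  apply countable_sub with (fun x => exists i : bool, True /\ if i then A x else B x).
  { intros x [Ax|Bx]; [exists true|exists false]; auto. }
  apply countable_union.
  - exists (fun b : bool => if b then 1 else 0). split; auto. intros [|] [|] _ _ E; congruence.
  - intros [|] _; auto.
Qed.

Lemma countable_image {X Y} (f : X -> Y) (A : X -> Prop) :
  countable_set A -> countable_set (fun y => exists x, A x /\ f x = y).
Proof.
  intros CA. apply countable_sub with (fun y => exists x, A x /\ (fun x y => y = f x) x y).
  - intros y [x [Ax <-]]. eauto.
  - apply countable_union; auto. intros x _. apply countable_singleton.
Qed.

Lemma countable_times_list {Y} (Z : Y -> Prop) :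
  countable_set Z -> countable_set (fun p : Y * list nat => Z (fst p)).
Proof.
  intros [g [_ Hg]]. exists (fun p => to_nat (g (fst p), code_list (snd p))). split; [now auto|].
  intros [y l] [y' l'] H1 H2 E. cbn [fst snd] in *. apply to_nat_inj in E. injection E as E1 E2.
  apply code_list_inj in E2. f_equal; auto.
Qed.

Lemma finite_sub {X} (A B : X -> Prop) : (forall x, A x -> B x) -> finite_set B -> finite_set A.
Proof. intros H [l Hl]. exists l. auto. Qed.

Lemma finite_countable {X} (A : X -> Prop) : finite_set A -> countable_set A.
Proof.
  intros [l Hl].
  destruct (choice_on A (fun x n => nth_error l n = Some x) (inhabits 0)) as [f Hf].
  { intros x Ax. apply In_nth_error. auto. }
  exists f. split; auto. intros x y Ax Ay E.
  pose proof (Hf x Ax) as E1. pose proof (Hf y Ay) as E2. rewrite E in E1. congruence.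
Qed.

Lemma finite_inj {X Y} (f : X -> Y) (A : X -> Prop) (B : Y -> Prop) :
  (forall x y, A x -> A y -> f x = f y -> x = y) -> (forall x, A x -> B (f x)) ->
  finite_set B -> finite_set A.
Proof.
  intros Hinj HB [l Hl].
  assert (H : forall y, exists ox : option X, forall x, A x -> f x = y -> ox = Some x).
  { intros y. destruct (classic (exists x, A x /\ f x = y)) as [[x [Ax E]]|Hn].
    - exists (Some x). intros x' Ax' E'. f_equal. apply Hinj; congruence.
    - exists None. intros x' Ax' E'. exfalso; eauto. }
  destruct (choice _ H) as [g Hg].
  exists (flat_map (fun y => match g y with Some x => [x] | None => [] end) l).
  intros x Ax. apply in_flat_map. exists (f x). split; auto.
  rewrite (Hg (f x) x Ax eq_refl). simpl; auto.
Qed.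

Lemma finite_card_le {X Y} (A : X -> Prop) (B : Y -> Prop) :
  card_le A B -> finite_set B -> finite_set A.
Proof. intros [f [H1 H2]]. eapply finite_inj; eauto. Qed.

Lemma infinite_inj_seq {X} (A : X -> Prop) : ~ finite_set A ->
  exists s : nat -> X, (forall n, A (s n)) /\ (forall n m, s n = s m -> n = m).
Proof.
  intros Hinf.
  assert (Hnext : forall l : list X, exists x, A x /\ ~ In x l).
  { intros l. apply NNPP. intro Hn. apply Hinf. exists l. intros x Ax.
    apply NNPP. intro Hx. apply Hn. eauto. }
  destruct (choice _ Hnext) as [nx Hnx].
  set (L := fix L (n : nat) : list X := match n with 0 => [] | S k => nx (L k) :: L k end).
  assert (Hin : forall n m, n < m -> In (nx (L n)) (L m)).
  { intros n m Hnm. induction Hnm; simpl; auto. }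
  exists (fun n => nx (L n)). split; [intro n; apply Hnx|].
  intros n m E. destruct (lt_eq_lt_dec n m) as [[lt|eq]|gt]; auto; exfalso.
  - apply (proj2 (Hnx (L m))). rewrite <- E. auto.
  - apply (proj2 (Hnx (L n))). rewrite E. auto.
Qed.

Lemma nat_not_finite : ~ finite_set (fun _ : nat => True).
Proof.
  intros [l Hl].
  assert (H : forall x, In x l -> x <= list_sum l).
  { clear Hl. induction l; simpl; intros x H; [contradiction|].
    destruct H as [<-|I]; [lia|]. specialize (IHl x I). lia. }
  specialize (H _ (Hl (S (list_sum l)) I)). lia.
Qed.

Lemma countable_diff {X} (A B : X -> Prop) :
  ~ countable_set A -> countable_set B -> ~ countable_set (fun x => A x /\ ~ B x).
Proof.
  intros HA HB HC. apply HA. apply countable_sub with (fun x => (A x /\ ~ B x) \/ B x).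
  { intros x Ax. destruct (classic (B x)); auto. }
  apply countable_union2; auto.
Qed.

Lemma uncountable_inhabited {X} (A : X -> Prop) : ~ countable_set A -> exists x, A x.
Proof. intros H. apply NNPP. intro Hn. apply H, countable_empty. auto. Qed.

(** * Infinite sets absorb countable factors *)

Lemma zorn_sets {T} (P : (T -> Prop) -> Prop) :
  (forall F : (T -> Prop) -> Prop, (forall Y, F Y -> P Y) ->
     (forall Y Z, F Y -> F Z -> (forall t, Y t -> Z t) \/ (forall t, Z t -> Y t)) ->
     P (fun t => exists Y, F Y /\ Y t)) ->
  exists A, P A /\ forall B, (forall t, A t -> B t) -> ~ (forall t, B t -> A t) -> ~ P B.
Proof.
  intros H.
  destruct (@classical_sets.Zorn_bigcup T P) as [A [PA HA]].
  - intros F HF Htot.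
    replace (classical_sets.bigcup F (fun X => X)) with (fun t => exists Y, F Y /\ Y t).
    + apply H; auto.
    + apply functional_extensionality; intro t. apply propositional_extensionality.
      split; [intros [Y [FY Yt]]; exists Y|intros [Y FY Yt]; exists Y]; auto.
  - exists A. split; auto. intros B H1 H2. apply HA. split; auto.
Qed.

Section Absorption.
Variables (X : Type) (A : X -> Prop).

Definition disjoint_seqs (F : (nat -> X) -> Prop) : Prop :=
  (forall s, F s -> (forall n, A (s n)) /\ (forall n m, s n = s m -> n = m)) /\
  (forall s s' n m, F s -> F s' -> s n = s' m -> s = s').

Definition seqs_range (F : (nat -> X) -> Prop) (x : X) : Prop := exists s n, F s /\ s n = x.

Lemma maximal_disjoint_seqs :
  exists F, disjoint_seqs F /\ finite_set (fun x => A x /\ ~ seqs_range F x).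
Proof.
  destruct (zorn_sets disjoint_seqs) as [F [[F1 F2] Fmax]].
  { intros Fs HF Htot. split.
    - intros s [Y [FY Ys]]. apply (proj1 (HF Y FY)). auto.
    - intros s s' n m [Y [FY Ys]] [Z [FZ Zs']] E.
      destruct (Htot Y Z FY FZ); [apply (proj2 (HF Z FZ)) with n m|apply (proj2 (HF Y FY)) with n m];
        auto. }
  exists F. split; [split; auto|]. apply NNPP. intro Hinf.
  destruct (infinite_inj_seq _ Hinf) as [s [Hs1 Hs2]].
  apply (Fmax (fun t => F t \/ t = s)); [auto| |split].
  - intro Hsub. apply (proj2 (Hs1 0)). exists s, 0. auto.
  - intros t [Ft| ->]; [apply F1; auto|split; auto; intro n; apply Hs1].
  - intros t t' n m [Ft| ->] [Ft'| ->] E; auto.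
    + eapply F2; eauto.
    + exfalso. apply (proj2 (Hs1 m)). exists t, n. auto.
    + exfalso. apply (proj2 (Hs1 n)). exists t', m. auto.
Qed.

(* The pair [(x, m)] goes to an even position of the sequence through [x], or, for the
   finitely many [x] outside all ranges, to an odd position of a fixed sequence [s0]. *)
Lemma infinite_absorbs_nat : ~ finite_set A -> card_le (fun p : X * nat => A (fst p)) A.
Proof.
  intros Ainf. destruct maximal_disjoint_seqs as [F [[F1 F2] [l Hl]]].
  destruct (classic (exists s0, F s0)) as [[s0 Fs0]|Hn].
  2:{ exfalso. apply Ainf. exists l. intros x Ax. apply Hl. split; auto.
      intros [s [n [Fs _]]]. eauto. }
  destruct (choice_on (seqs_range F) (fun x sn => F (fst sn) /\ fst sn (snd sn) = x)) as [idx Hidx];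
    [constructor; exact (s0, 0)|intros x [s [n ?]]; exists (s, n); auto|].
  destruct (choice_on (fun x => A x /\ ~ seqs_range F x) (fun x j => nth_error l j = Some x))
    as [pos Hpos]; [constructor; exact 0|intros x Hx; apply In_nth_error; auto|].
  exists (fun p => if excluded_middle_informative (seqs_range F (fst p))
           then fst (idx (fst p)) (2 * to_nat (snd (idx (fst p)), snd p))
           else s0 (S (2 * to_nat (pos (fst p), snd p)))).
  split.
  - intros [x m] Ax. cbn [fst snd] in *. destruct (excluded_middle_informative _) as [i|n].
    + apply (F1 _ (proj1 (Hidx x i))).
    + apply (F1 _ Fs0).
  - intros [x m] [y m'] Ax Ay. cbn [fst snd] in *.
    destruct (excluded_middle_informative (seqs_range F x)) as [ix|nx];
    destruct (excluded_middle_informative (seqs_range F y)) as [iy|ny]; intro E.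
    + destruct (Hidx x ix) as [Fx Ex], (Hidx y iy) as [Fy Ey].
      pose proof (F2 _ _ _ _ Fx Fy E) as Es. rewrite Es in E. apply (proj2 (F1 _ Fy)) in E.
      assert (E3 : to_nat (snd (idx x), m) = to_nat (snd (idx y), m')) by lia.
      apply to_nat_inj in E3. injection E3 as E3 ->.
      rewrite <- Ex, <- Ey, Es, E3. auto.
    + destruct (Hidx x ix) as [Fx _]. rewrite (F2 _ _ _ _ Fx Fs0 E) in E.
      apply (proj2 (F1 _ Fs0)) in E. lia.
    + destruct (Hidx y iy) as [Fy _]. rewrite <- (F2 _ _ _ _ Fs0 Fy E) in E.
      apply (proj2 (F1 _ Fs0)) in E. lia.
    + apply (proj2 (F1 _ Fs0)) in E.
      assert (E3 : to_nat (pos x, m) = to_nat (pos y, m')) by lia.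
      apply to_nat_inj in E3. injection E3 as E3 ->.
      pose proof (Hpos x (conj Ax nx)) as H1. pose proof (Hpos y (conj Ay ny)) as H2.
      rewrite E3 in H1. congruence.
Qed.

End Absorption.

Lemma card_le_times_list {X Y} (W : X -> Prop) (Z B C : Y -> Prop) :
  ~ finite_set W -> (forall y, Z y -> B y \/ C y) -> countable_set B -> card_le C W ->
  card_le (fun p : Y * list nat => Z (fst p)) W.
Proof.
  intros Winf HZ [gB [_ HgB]] [hC [HhC1 HhC2]].
  eapply card_le_trans; [|apply (infinite_absorbs_nat X W Winf)].
  destruct (infinite_inj_seq W Winf) as [w [Hw _]].
  exists (fun p => if excluded_middle_informative (C (fst p))
          then (hC (fst p), 2 * code_list (snd p))
          else (w 0, S (2 * to_nat (gB (fst p), code_list (snd p))))).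
  split.
  - intros [y l] Zy. simpl. destruct (excluded_middle_informative (C y)); simpl; auto.
  - intros [y l] [y' l'] Zy Zy'. cbn [fst snd] in *.
    destruct (excluded_middle_informative (C y)) as [cy|ny];
    destruct (excluded_middle_informative (C y')) as [cy'|ny']; intro E;
      pose proof (f_equal fst E) as E1; pose proof (f_equal snd E) as E2; cbn [fst snd] in E1, E2;
      try lia.
    + f_equal; [auto|]. apply code_list_inj. lia.
    + assert (E3 : to_nat (gB y, code_list l) = to_nat (gB y', code_list l')) by lia.
      apply to_nat_inj in E3. injection E3 as E4 E5.
      apply code_list_inj in E5. f_equal; [apply HgB|]; auto.
      * destruct (HZ y Zy); tauto.
      * destruct (HZ y' Zy'); tauto.
Qed.

(** * Well-orders, initial ordinals and cofinality *)

Module WellOrdering.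
Import ssreflect ssrbool eqtype boolp wochoice.

Lemma minimum_order_exists (X : Type) : exists R : X -> X -> Prop,
  forall S : X -> Prop, (exists x, S x) -> exists z, S z /\ (forall y, S y -> R z y) /\
     (forall z', S z' -> (forall y, S y -> R z' y) -> z' = z).
Proof.
have [R wR] := @well_ordering_principle {classic X}.
exists (fun x y => R x y) => S [x Sx].
have ne : nonempty (fun y : {classic X} => `[< S y >]) by exists x; apply/asboolP.
case: (wR _ ne) => z [[Sz lb] U]. exists z; split; first by move/asboolP: Sz.
split; first by move=> y Sy; apply: lb; rewrite unfold_in; apply/asboolP.
move=> z' Sz' lb'. symmetry. apply: U. split; first by rewrite unfold_in; apply/asboolP.
by move=> y; rewrite unfold_in => /asboolP Sy; apply: lb'.
Qed.

End WellOrdering.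

Lemma well_order_exists (X : Type) : exists R : X -> X -> Prop, well_order_on (fun _ => True) R.
Proof.
  destruct (WellOrdering.minimum_order_exists X) as [R HR].
  assert (HR2 : forall x y, exists z, (z = x \/ z = y) /\ R z x /\ R z y /\
             forall z', (z' = x \/ z' = y) -> R z' x -> R z' y -> z' = z).
  { intros x y. destruct (HR (fun z => z = x \/ z = y)) as [z [Sz [H U]]]; eauto.
    exists z. repeat split; auto. intros z' Sz' H1 H2. apply U; auto. intros w [-> | ->]; auto. }
  assert (tot : forall x y, R x y \/ R y x).
  { intros x y. destruct (HR2 x y) as [z [[-> | ->] [H1 [H2 _]]]]; auto. }
  assert (anti : forall x y, R x y -> R y x -> x = y).
  { intros x y Rxy Ryx. destruct (HR2 x y) as [z [_ [_ [_ U]]]].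
    assert (Rxx : R x x) by (destruct (tot x x); auto).
    assert (Ryy : R y y) by (destruct (tot y y); auto).
    rewrite (U x), (U y); auto. }
  assert (trans : forall x y z, R x y -> R y z -> R x z).
  { intros x y z Rxy Ryz. destruct (HR (fun w => w = x \/ w = y \/ w = z)) as [m [Sm [H _]]]; eauto.
    destruct Sm as [-> | [-> | ->]]; auto.
    - rewrite (anti x y); auto.
    - rewrite <- (anti y z); auto. }
  exists (fun x y => R x y /\ x <> y). split; [|split; [|split]].
  - intros x _ [_ N]. auto.
  - intros x y z _ _ _ [H1 N1] [H2 N2]. split; eauto. intros ->. apply N1, anti; auto.
  - intros x y _ _. destruct (classic (x = y)) as [e|ne]; [now left|]. right.
    destruct (tot x y); [left|right]; split; auto.
  - intros S _ Hne. destruct (HR S Hne) as [z [Sz [H _]]]. exists z. split; [exact Sz|].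
    intros y Sy. destruct (classic (y = z)) as [e|ne]; [now left|]. right. split; auto.
Qed.

Section WellOrderFacts.
Context {X : Type} {A : X -> Prop} {R : X -> X -> Prop} (W : well_order_on A R).

Lemma wo_irr x : A x -> ~ R x x.
Proof. apply W. Qed.
Lemma wo_trans x y z : A x -> A y -> A z -> R x y -> R y z -> R x z.
Proof. apply W. Qed.
Lemma wo_total x y : A x -> A y -> x = y \/ R x y \/ R y x.
Proof. apply W. Qed.
Lemma wo_min (S : X -> Prop) : (forall x, S x -> A x) -> (exists x, S x) ->
  exists m, S m /\ forall y, S y -> y = m \/ R m y.
Proof. apply W. Qed.
Lemma wo_asym x y : A x -> A y -> R x y -> ~ R y x.
Proof. intros Ax Ay H1 H2. apply (wo_irr x Ax). apply (wo_trans x y x); auto. Qed.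
Lemma wo_min_not_lt (S : X -> Prop) m y : A m -> A y -> (forall y, S y -> y = m \/ R m y) ->
  S y -> ~ R y m.
Proof.
  intros Am Ay Hm Sy Hy. destruct (Hm y Sy) as [->|E].
  - exact (wo_irr m Am Hy).
  - exact (wo_asym y m Ay Am Hy E).
Qed.

End WellOrderFacts.

Lemma wo_wf {X} (R : X -> X -> Prop) : well_order_on (fun _ => True) R -> well_founded R.
Proof.
  intros W x. apply NNPP. intro Hn.
  destruct (wo_min W (fun y => ~ Acc R y)) as [m [Hm Hmin]]; eauto.
  apply Hm. constructor. intros y Hy. apply NNPP. intro Hy'.
  exact (wo_min_not_lt W _ m y I I Hmin Hy' Hy).
Qed.

Lemma well_order_on_sub {X} (A B : X -> Prop) (R : X -> X -> Prop) :
  well_order_on A R -> (forall x, B x -> A x) -> well_order_on B R.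
Proof.
  intros W HBA. split; [|split; [|split]].
  - intros x Bx. apply (wo_irr W); auto.
  - intros x y z Bx By Bz. apply (wo_trans W); auto.
  - intros x y Bx By. apply (wo_total W); auto.
  - intros S HS Hne. apply (wo_min W); auto.
Qed.

Lemma well_order_on_pullback {X Y} (f : X -> Y) (Q : X -> Prop) (R : Y -> Y -> Prop) :
  well_order_on (fun y => exists x, Q x /\ y = f x) R ->
  (forall a b, Q a -> Q b -> f a = f b -> a = b) ->
  well_order_on Q (fun a b => R (f a) (f b)).
Proof.
  intros W Hinj. split; [|split; [|split]].
  - intros x Qx. apply (wo_irr W). eauto.
  - intros x y z Qx Qy Qz. apply (wo_trans W); eauto.
  - intros x y Qx Qy. destruct (wo_total W (f x) (f y)) as [E|E]; eauto.
  - intros S HS [x0 Sx0].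
    destruct (wo_min W (fun y => exists x, S x /\ y = f x)) as [m [[xm [Sxm ->]] Hm]];
      [intros y [x [Sx ->]]; eauto|eauto|].
    exists xm. split; auto. intros y Sy. destruct (Hm (f y)) as [E|E]; eauto.
Qed.

Lemma sig_inj {K} (P : K -> Prop) (a b : {x | P x}) : proj1_sig a = proj1_sig b -> a = b.
Proof. destruct a, b; simpl; intros; subst; f_equal; apply proof_irrelevance. Qed.

Lemma wo_sig {K} (lt : K -> K -> Prop) (P : K -> Prop) :
  well_order_on (fun _ => True) lt ->
  well_order_on (fun _ : {x | P x} => True) (fun a b => lt (proj1_sig a) (proj1_sig b)).
Proof.
  intros W. split; [|split; [|split]].
  - intros x _. apply (wo_irr W); auto.
  - intros x y z _ _ _. apply (wo_trans W); auto.
  - intros x y _ _. destruct (wo_total W (proj1_sig x) (proj1_sig y)) as [E|E]; auto.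
    left. apply sig_inj. auto.
  - intros S _ [x0 Sx0]. destruct (wo_min W (fun k => exists pk, S (exist _ k pk))) as [m [[pm Sm] Hm]].
    { auto. }
    { exists (proj1_sig x0), (proj2_sig x0). destruct x0; auto. }
    exists (exist _ m pm). split; auto. intros [y py] Sy. simpl.
    destruct (Hm y (ex_intro _ py Sy)) as [E|E]; auto. left. apply sig_inj. auto.
Qed.

Lemma card_le_sig {K} (P : K -> Prop) : card_le (fun _ : {x | P x} => True) P.
Proof. exists (@proj1_sig _ _). split; [intros [x px] _; exact px|intros; apply sig_inj; auto]. Qed.

Lemma card_le_full_sig {X K} (P : K -> Prop) :
  card_le (fun _ : X => True) P -> card_le (fun _ : X => True) (fun _ : {x | P x} => True).
Proof.
  intros [f [Hf1 Hf2]]. exists (fun x => exist P (f x) (Hf1 x I)). split; [auto|].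
  intros x y _ _ E. apply Hf2; auto. exact (f_equal (@proj1_sig _ _) E).
Qed.

Lemma initial_ordinal_exists (T : Type) : exists (K : Type) (ltK : K -> K -> Prop),
  initial_ordinal_of ltK (fun _ : T => True).
Proof.
  destruct (well_order_exists T) as [W HW].
  destruct (classic (exists t, card_le (fun _ : T => True) (fun s => W s t))) as [Hex|Hno].
  - destruct (wo_min HW _ (fun _ _ => I) Hex) as [t0 [Ht0 Hmin]].
    exists {s : T | W s t0}, (fun a b => W (proj1_sig a) (proj1_sig b)).
    split; [apply wo_sig; auto|split; [split|]].
    + eapply card_le_trans; [apply card_le_sig|apply card_le_sub; auto].
    + apply card_le_full_sig; auto.
    + intros k. split; [apply card_le_sub; auto|]. intro Hle.
      apply (wo_min_not_lt HW _ t0 (proj1_sig k) I I Hmin); [|exact (proj2_sig k)].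
      eapply card_le_trans; [exact (card_le_full_sig _ Ht0)|].
      eapply card_le_trans; [exact Hle|]. exists (@proj1_sig _ _). split; [auto|].
      intros; apply sig_inj; auto.
  - exists T, W. split; [auto|split; [split; apply card_le_refl|]].
    intros k. split; [apply card_le_sub; auto|]. intro H. apply Hno. eauto.
Qed.

Lemma wf_recursion {K Y} (lt : K -> K -> Prop) (wf : well_founded lt) (y0 : Y)
  (F : K -> (K -> Y) -> Y) :
  (forall k g g', (forall j, lt j k -> g j = g' j) -> F k g = F k g') ->
  exists g : K -> Y, forall k, g k = F k g.
Proof.
  intros Floc.
  set (F' := fun k (h : forall j, lt j k -> Y) =>
         F k (fun j => match excluded_middle_informative (lt j k) with
                       | left H => h j H | right _ => y0 end)).
  exists (Fix wf (fun _ => Y) F'). intro k. rewrite Fix_eq.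
  - unfold F'. apply Floc. intros j Hj.
    destruct (excluded_middle_informative (lt j k)); [auto|contradiction].
  - intros x f f' Hff. unfold F'. f_equal. apply functional_extensionality. intro j.
    destruct (excluded_middle_informative (lt j x)); auto.
Qed.

Section Cofinality.
Variables (K : Type) (lt : K -> K -> Prop).
Hypothesis W : well_order_on (fun _ => True) lt.

Definition cofinal_from_below (i : K) : Prop :=
  exists h : K -> K, (forall j j', lt j j' -> lt j' i -> lt (h j) (h j')) /\
                     (forall k, exists j, lt j i /\ (k = h j \/ lt k (h j))).

(* Recursively pick [g j] in [C] above all earlier values; the bound exists as long as
   [{j < k}] is not itself mapped cofinally. *)
Lemma increasing_into_cofinal (D : K -> Prop) (y0 : K) :
  (forall i j, D i -> lt j i -> D j) -> (forall i, D i -> ~ cofinal_from_below i) ->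
  forall C, cofinal_in lt C ->
  exists g : K -> K, (forall j j', lt j j' -> D j' -> lt (g j) (g j')) /\ (forall j, D j -> C (g j)).
Proof.
  intros Ddown NoQ C HC.
  set (P := fun (k : K) (g : K -> K) (c : K) => C c /\ forall j, lt j k -> lt (g j) c).
  destruct (wf_recursion lt (wo_wf _ W) y0 (fun k g => epsilon (inhabits k) (P k g))) as [g Hg].
  { intros k g g' Hgg. f_equal. apply functional_extensionality; intro c.
    apply propositional_extensionality. unfold P. split; intros [Cc H]; split; auto;
    intros j Hj; [rewrite <- Hgg|rewrite Hgg]; auto. }
  assert (Hind : forall k, D k -> P k g (g k)).
  { intro k. induction (wo_wf _ W k) as [k _ IH]. intros Dk.
    rewrite Hg. apply epsilon_spec.
    assert (Hinc : forall j j', lt j j' -> lt j' k -> lt (g j) (g j')).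
    { intros j j' Hjj' Hj'. apply (IH j' Hj' (Ddown _ _ Dk Hj')). auto. }
    assert (Hb : exists k', forall j, lt j k -> lt (g j) k').
    { apply NNPP. intro Hn. apply (NoQ k Dk). exists g. split; auto.
      intro k'. apply NNPP. intro Hn2. apply Hn. exists k'. intros j Hj.
      destruct (wo_total W (g j) k') as [E|[E|E]]; auto; exfalso; apply Hn2; eauto. }
    destruct Hb as [k' Hk']. destruct (HC k') as [c [Cc Hc]].
    exists c. split; auto. intros j Hj. destruct Hc as [<-|E]; auto.
    apply (wo_trans W _ k'); auto. }
  exists g. split.
  - intros j j' Hjj' Dj'. apply (proj2 (Hind j' Dj')). auto.
  - intros j Dj. apply (Hind j Dj).
Qed.

Lemma cofinality_exists (y0 : K) : exists (I : Type) (ltI : I -> I -> Prop), cofinality_order ltI lt.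
Proof.
  destruct (classic (exists i, cofinal_from_below i)) as [HQ|HnQ].
  - destruct (wo_min W _ (fun _ _ => I) HQ) as [k0 [[h [Hh1 Hh2]] Hmin]].
    exists {j | lt j k0}, (fun a b => lt (proj1_sig a) (proj1_sig b)).
    split; [apply wo_sig; auto|split].
    + exists (fun a => h (proj1_sig a)). split.
      * intros [a pa] [b pb] Hab. simpl in *. apply Hh1; auto.
      * intro k. destruct (Hh2 k) as [j [Hj E]]. exists (h j). split; auto. exists (exist _ j Hj). auto.
    + intros C HC. destruct (increasing_into_cofinal (fun j => lt j k0) y0) with (C := C)
        as [g [Hg1 Hg2]]; auto.
      * intros i j Hi Hj. apply (wo_trans W _ i); auto.
      * intros i Hi Qi. exact (wo_min_not_lt W _ k0 i I I Hmin Qi Hi).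
      * exists (fun a => g (proj1_sig a)). split.
        -- intros [a pa] [b pb] Hab. simpl in *. apply Hg1; auto.
        -- intros [a pa]. simpl. auto.
  - exists K, lt. split; [auto|split].
    + exists (fun k => k). split; [intros i j H; exact H|]. intro k. exists k. split; eauto.
    + intros C HC. destruct (increasing_into_cofinal (fun _ => True) y0) with (C := C)
        as [g [Hg1 Hg2]]; auto.
      * intros i _ Qi. apply HnQ. eauto.
      * exists g. split; auto. intros i j Hij. apply Hg1; auto.
Qed.

End Cofinality.

Lemma initial_ordinal_no_max {K X} (ltK : K -> K -> Prop) (A : X -> Prop) :
  initial_ordinal_of ltK A -> ~ finite_set A -> forall k, exists k', ltK k k'.
Proof.
  intros [WK [[_ HAK] Hseg]] Ainf k. apply NNPP. intro Hn.
  assert (Hle : forall k', k' = k \/ ltK k' k).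
  { intro k'. destruct (wo_total WK k' k) as [E|[E|E]]; auto. exfalso; eauto. }
  assert (Winf : ~ finite_set (fun k' => ltK k' k)).
  { intros [l Hl]. apply Ainf, (finite_card_le _ _ HAK). exists (k :: l).
    intros k' _. destruct (Hle k'); [left|right]; auto. }
  destruct (infinite_inj_seq _ Winf) as [sq [Hsq _]].
  apply (proj2 (Hseg k)).
  eapply card_le_trans; [|apply (infinite_absorbs_nat K _ Winf)].
  exists (fun k' => if excluded_middle_informative (k' = k) then (sq 0, 1) else (k', 0)). split.
  - intros k' _. destruct (excluded_middle_informative (k' = k)); simpl; auto.
    destruct (Hle k'); [contradiction|auto].
  - intros a b _ _.
    destruct (excluded_middle_informative (a = k)), (excluded_middle_informative (b = k));
      intro E; try congruence; injection E; intros; subst; auto; lia.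
Qed.

Lemma cofinality_no_max {I K} (ltI : I -> I -> Prop) (ltK : K -> K -> Prop) :
  well_order_on (fun _ => True) ltK -> cofinality_order ltI ltK ->
  (forall k, exists k', ltK k k') -> forall i, exists i', ltI i i'.
Proof.
  intros WK [WI [[f [Hfinc Hfcof]] _]] Kmax i.
  destruct (Kmax (f i)) as [k Hk]. destruct (Hfcof k) as [c [[i' <-] Hc]].
  exists i'. destruct (wo_total WI i i') as [<-|[E|E]]; auto; exfalso;
    apply (wo_irr WK (f i)); auto.
  - destruct Hc as [->|E]; [exact Hk|apply (wo_trans WK _ k); auto].
  - pose proof (Hfinc _ _ E) as H. destruct Hc as [E2|E2].
    + subst k. apply (wo_trans WK _ (f i')); auto.
    + apply (wo_trans WK _ k); auto. apply (wo_trans WK _ (f i')); auto.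
Qed.

(** * Walks and components *)

Lemma last_cons {V} (a x : V) l : last (a :: l) x = last l a.
Proof.
  revert a x; induction l as [|b l IH]; intros a x; [reflexivity|].
  change (last (b :: l) x = last (b :: l) a). rewrite !IH. reflexivity.
Qed.

Lemma last_app {V} (l1 l2 : list V) x : last (l1 ++ l2) x = last l2 (last l1 x).
Proof.
  revert x; induction l1 as [|a l1 IH]; intros x; [reflexivity|].
  change (last (a :: (l1 ++ l2)) x = last l2 (last (a :: l1) x)). rewrite !last_cons. apply IH.
Qed.

Lemma last_app_cons {V} (l1 l2 : list V) (w x : V) : last (l1 ++ w :: l2) x = last l2 w.
Proof. rewrite last_app, last_cons. reflexivity. Qed.

Lemma last_in_or {V} (l : list V) x : last l x = x \/ In (last l x) l.
Proof.
  revert x; induction l as [|a l IH]; intros x; [now left|]. right. rewrite last_cons.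
  destruct (IH a) as [->|H]; simpl; auto.
Qed.

Lemma in_removelast {A} (l : list A) v : In v (removelast l) -> In v l.
Proof.
  induction l as [|a l IH]; simpl; auto. destruct l as [|b l]; simpl; [intros []|].
  intros [E|H]; auto. right. apply IH. exact H.
Qed.

Lemma walk_app {V} (R : V -> V -> Prop) x l1 l2 :
  walk R x (l1 ++ l2) <-> walk R x l1 /\ walk R (last l1 x) l2.
Proof.
  revert x; induction l1 as [|a l1 IH]; intros x.
  - simpl. tauto.
  - rewrite last_cons. simpl. rewrite IH. tauto.
Qed.

Lemma walk_snoc {V} (R : V -> V -> Prop) x l y :
  walk R x (l ++ [y]) <-> walk R x l /\ R (last l x) y.
Proof. rewrite walk_app. simpl. tauto. Qed.

Lemma walk_prefix {V} (R : V -> V -> Prop) c l v : walk R c l -> In v l ->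
  exists l', walk R c l' /\ last l' c = v /\ incl l' l.
Proof.
  intros W Hv. apply in_split in Hv as [p [q ->]].
  exists (p ++ [v]). split; [|split].
  - apply walk_app in W as [W1 W2]. apply walk_snoc. simpl in W2. tauto.
  - apply last_last.
  - intros a Ha. apply in_app_or in Ha as [Ha|[<-|[]]]; apply in_or_app; simpl; auto.
Qed.

Lemma walk_rev {V} (R : V -> V -> Prop) (Rsym : forall a b, R a b -> R b a) x l :
  walk R x l -> exists l', walk R (last l x) l' /\ last l' (last l x) = x /\
     (forall v, In v l' -> v = x \/ In v l).
Proof.
  revert x; induction l as [|y l IH]; intros x W.
  - exists []. simpl. split; [exact I|split; [reflexivity|intros v []]].
  - destruct W as [Rxy W]. destruct (IH y W) as [l' [W' [E' I']]].
    rewrite last_cons. exists (l' ++ [x]). split; [|split].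
    + apply walk_snoc. rewrite E'. auto.
    + apply last_last.
    + intros v Hv. apply in_app_or in Hv as [Hv|[<-|[]]]; auto.
      destruct (I' v Hv) as [<-|E]; right; simpl; auto.
Qed.

Lemma walk_shorten {V} (R : V -> V -> Prop) x l : walk R x l ->
  exists l', walk R x l' /\ last l' x = last l x /\ NoDup (x :: l') /\ incl l' l.
Proof.
  revert x; induction l as [|y l IH]; intros x W.
  - exists []. repeat split; auto. constructor; auto. constructor. intros a [].
  - destruct W as [Rxy W]. destruct (IH y W) as [l1 [W1 [E1 [N1 I1]]]].
    rewrite last_cons.
    destruct (classic (In x (y :: l1))) as [[<-|Hin]|Hnin].
    + exists l1. repeat split; auto. intros a Ha. right. auto.
    + apply in_split in Hin as [p [q ->]].
      rewrite last_app_cons in E1. exists q. split; [|split; [|split]]; auto.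
      * apply walk_app in W1 as [_ W2]. apply W2.
      * inversion N1 as [|? ? N2 N3]. apply NoDup_remove_2 in N3 as N4.
        constructor.
        -- intro Hq. apply N4. apply in_or_app. right. auto.
        -- apply NoDup_remove_1 in N3. apply NoDup_app_remove_l in N3. auto.
      * intros a Ha. right. apply I1. apply in_or_app. simpl. auto.
    + exists (y :: l1). split; [|split; [|split]].
      * split; auto.
      * rewrite last_cons. auto.
      * constructor; auto.
      * intros a [Ha|Ha]; [left; auto|right; auto].
Qed.

Lemma split_first {V} (P : V -> Prop) (l : list V) :
  Forall (fun v => ~ P v) l \/
  exists l1 w l2, l = l1 ++ w :: l2 /\ Forall (fun v => ~ P v) l1 /\ P w.
Proof.
  induction l as [|a l IH]; [left; constructor|].
  destruct (classic (P a)) as [Pa|nPa].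
  - right. exists [], a, l. repeat split; auto.
  - destruct IH as [H|[l1 [w [l2 [-> [F Pw]]]]]].
    + left. constructor; auto.
    + right. exists (a :: l1), w, l2. repeat split; auto.
Qed.

Lemma split_last {V} (P : V -> Prop) (l : list V) : (exists v, In v l /\ P v) ->
  exists l1 w l2, l = l1 ++ w :: l2 /\ Forall (fun v => ~ P v) l2 /\ P w.
Proof.
  induction l as [|a l IH]; intros [v [Hv Pv]]; [destruct Hv|].
  destruct (classic (exists v, In v l /\ P v)) as [Hex|Hno].
  - destruct (IH Hex) as [l1 [w [l2 [-> [F Pw]]]]]. exists (a :: l1), w, l2. auto.
  - exists [], a, l. split; auto. split.
    + apply Forall_forall. intros x Hx Px. apply Hno. eauto.
    + destruct Hv as [<-|Hv]; [auto|exfalso; apply Hno; eauto].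
Qed.

Section Reachability.
Context {V : Type} (adj : V -> V -> Prop).

Lemma reach_refl X u : reach_avoiding adj X u u.
Proof. exists []. simpl. repeat split; auto. Qed.

Lemma reach_trans X a b c :
  reach_avoiding adj X a b -> reach_avoiding adj X b c -> reach_avoiding adj X a c.
Proof.
  intros [l1 [W1 [E1 F1]]] [l2 [W2 [E2 F2]]]. exists (l1 ++ l2).
  split; [|split].
  - apply walk_app. rewrite E1. auto.
  - rewrite last_app, E1. auto.
  - apply Forall_app. auto.
Qed.

Lemma reach_step X a b c :
  reach_avoiding adj X a b -> adj b c -> ~ X c -> reach_avoiding adj X a c.
Proof. intros H Hbc Hc. apply reach_trans with b; auto. exists [c]. simpl. auto. Qed.

Lemma reach_mono (X Y : V -> Prop) a b :
  (forall v, Y v -> X v) -> reach_avoiding adj X a b -> reach_avoiding adj Y a b.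
Proof.
  intros H [l [W [E F]]]. exists l. repeat split; auto.
  eapply Forall_impl; [|exact F]. simpl. auto.
Qed.

Lemma reach_within (X P : V -> Prop) a b :
  (forall v, P v -> ~ X v) ->
  (exists l, walk adj a l /\ last l a = b /\ Forall P l) -> reach_avoiding adj X a b.
Proof.
  intros H [l [W [E F]]]. exists l. repeat split; auto. eapply Forall_impl; [|exact F]. auto.
Qed.

Lemma reach_prefix X u l :
  walk adj u l -> Forall (fun w => ~ X w) l -> forall v, In v l -> reach_avoiding adj X u v.
Proof.
  intros W F v Hv. destruct (walk_prefix adj u l v W Hv) as [l' [W' [E' I']]].
  exists l'. repeat split; auto. apply Forall_forall. intros w Hw.
  rewrite Forall_forall in F. auto.
Qed.

Hypothesis adj_sym : forall a b, adj a b -> adj b a.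

Lemma reach_sym X a b :
  ~ X a -> reach_avoiding adj X a b -> reach_avoiding adj X b a.
Proof.
  intros Ha [l [W [<- F]]]. destruct (walk_rev adj adj_sym a l W) as [l' [W' [E' I']]].
  exists l'. repeat split; auto.
  apply Forall_forall. intros v Hv. destruct (I' v Hv) as [->|Ev]; [auto|].
  rewrite Forall_forall in F. auto.
Qed.

Lemma connected_star (Z : V -> Prop) (c : V) : Z c ->
  (forall v, Z v -> exists l, walk adj c l /\ last l c = v /\ Forall Z l) ->
  connected_in adj Z.
Proof.
  intros Zc H x y Zx Zy.
  destruct (H x Zx) as [l1 [W1 [<- F1]]]. destruct (H y Zy) as [l2 [W2 [<- F2]]].
  destruct (walk_rev adj adj_sym c l1 W1) as [l1' [W1' [E1' I1']]].
  exists (l1' ++ l2). split; [|split].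
  - apply walk_app. rewrite E1'. auto.
  - rewrite last_app, E1'. auto.
  - apply Forall_app. split; auto. apply Forall_forall. intros v Hv.
    destruct (I1' v Hv) as [->|Ev]; [auto|]. rewrite Forall_forall in F1. auto.
Qed.

Lemma connected_in_add (Z : V -> Prop) z y :
  connected_in adj Z -> Z z -> adj z y -> connected_in adj (fun v => Z v \/ v = y).
Proof.
  intros HZ Zz Hzy. apply (connected_star _ z); [now left|].
  intros v [Zv| ->].
  - destruct (HZ z v Zz Zv) as [l [W [E F]]]. exists l. repeat split; auto.
    eapply Forall_impl; [|exact F]. auto.
  - exists [y]. simpl. auto.
Qed.

Lemma countable_connected_hull (N Y : V -> Prop) x : countable_set Y ->
  (forall y, Y y -> exists z, reach_avoiding adj N x z /\ adj z y) ->
  exists W, W x /\ countable_set W /\ connected_in adj W /\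
    (forall v, W v -> reach_avoiding adj N x v) /\ (forall y, Y y -> exists z, W z /\ adj z y).
Proof.
  intros CY HY.
  destruct (choice_on Y (fun y l => walk adj x l /\ Forall (fun w => ~ N w) l /\ adj (last l x) y))
    as [lw Hlw]; [constructor; exact []| |].
  { intros y Yy. destruct (HY y Yy) as [z [[l [W [<- F]]] Hz]]. eauto. }
  exists (fun v => v = x \/ exists y, Y y /\ In v (lw y)). split; [|split; [|split; [|split]]].
  - now left.
  - apply countable_union2; [apply countable_singleton|]. apply countable_union; auto.
    intros y _. apply finite_countable. exists (lw y). auto.
  - apply (connected_star _ x); [now left|]. intros v [->|[y [Yy Hv]]]; [exists []; simpl; auto|].
    destruct (walk_prefix adj x _ v (proj1 (Hlw y Yy)) Hv) as [l' [W' [E' I']]].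
    exists l'. repeat split; auto. apply Forall_forall. intros a Ha. right. eauto.
  - intros v [->|[y [Yy Hv]]]; [apply reach_refl|].
    destruct (Hlw y Yy) as [W [F _]]. eapply reach_prefix; eauto.
  - intros y Yy. exists (last (lw y) x). split; [|apply Hlw; auto].
    destruct (last_in_or (lw y) x) as [E|E]; [left|right; exists y]; auto.
Qed.

End Reachability.

(** * Closures and countable colouring numbers *)

Section Closure.
Context {X : Type} (op : X -> X -> Prop).

Inductive closure (Z : X -> Prop) : X -> Prop :=
| closure_base x : Z x -> closure Z x
| closure_step x y : closure Z x -> op x y -> closure Z y.

Lemma closure_mono (Z Z' : X -> Prop) :
  (forall x, Z x -> Z' x) -> forall t, closure Z t -> closure Z' t.
Proof. intros H t Ht. induction Ht; [apply closure_base|eapply closure_step]; eauto. Qed.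

Lemma closure_from_point Z t : closure Z t -> exists x0, Z x0 /\ closure (fun y => y = x0) t.
Proof.
  intros Ht. induction Ht as [x Hx|x y Hx [x0 [H0 H1]] Hxy].
  - exists x. split; auto. apply closure_base. auto.
  - exists x0. split; auto. eapply closure_step; eauto.
Qed.

(* Each element of the closure is coded by a base point and the list of the (countably
   many possible) codes of the [op]-steps leading to it. *)
Lemma closure_card_le Z : (forall x, countable_set (op x)) ->
  card_le (closure Z) (fun q : X * list nat => Z (fst q)).
Proof.
  intros Hop.
  destruct (classic (exists t, closure Z t)) as [[t0 _]|Hn].
  2:{ exists (fun x => (x, [])). split; intros x; [|intros y]; intros Hx; exfalso; eauto. }
  destruct (choice_on (fun _ : X => True)
    (fun x (h : X -> nat) => forall a b, op x a -> op x b -> h a = h b -> a = b)) as [code Hcode];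
    [constructor; exact (fun _ => 0)|intros x _; destruct (Hop x) as [h [_ Hh]]; eauto|].
  set (decode := fun x n => epsilon (inhabits x) (fun y => op x y /\ code x y = n)).
  assert (Hdecode : forall x y, op x y -> decode x (code x y) = y).
  { intros x y Hxy.
    destruct (epsilon_spec (inhabits x) (fun y0 => op x y0 /\ code x y0 = code x y)) as [H1 H2].
    { exists y. auto. }
    apply (Hcode x I); auto. }
  assert (Hrun : forall t, closure Z t ->
    exists q : X * list nat, Z (fst q) /\ fold_left decode (snd q) (fst q) = t).
  { intros t Ht. induction Ht as [x Hx|x y Hx [[x0 l] [H1 H2]] Hxy].
    - exists (x, []). simpl. auto.
    - exists (x0, l ++ [code x y]). simpl in *. split; auto.
      rewrite fold_left_app. simpl. rewrite H2. apply Hdecode. auto. }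
  destruct (choice_on (closure Z) (fun t q => Z (fst q) /\ fold_left decode (snd q) (fst q) = t))
    as [f Hf]; [constructor; exact (t0, [])|auto|].
  exists f. split; [intros t Ht; apply (Hf t Ht)|].
  intros t t' Ht Ht' E. destruct (Hf t Ht) as [_ <-], (Hf t' Ht') as [_ <-]. rewrite E. auto.
Qed.

Lemma closure_countable Z : (forall x, countable_set (op x)) -> countable_set Z ->
  countable_set (closure Z).
Proof.
  intros Hop CZ. eapply card_le_trans; [apply closure_card_le; auto|].
  apply countable_times_list. auto.
Qed.

End Closure.

Section Colouring.
Context {W : Type} (P : W -> Prop) (E : W -> W -> Prop).

Lemma colouring_later_neighbour (R : W -> W -> Prop) (L : W -> Prop) w :
  well_order_on P R -> (forall w, P w -> finite_set (fun w' => P w' /\ E w w' /\ R w' w)) ->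
  P w -> (forall w', L w' -> P w' /\ E w w' /\ w' <> w) -> ~ finite_set L ->
  exists w', L w' /\ R w w'.
Proof.
  intros HR Hfin Pw HL Linf. apply NNPP. intro Hn. apply Linf.
  apply (finite_sub _ (fun w' => P w' /\ E w w' /\ R w' w)); [|apply Hfin; auto].
  intros w' HLw'. destruct (HL w' HLw') as [Pw' [Ew' Nw']]. repeat split; auto.
  destruct (wo_total HR w' w Pw' Pw) as [E'|[E'|E']]; [contradiction|auto|exfalso; eauto].
Qed.

Hypothesis E_sym : forall a b, E a b -> E b a.
Hypothesis E_irr : forall a, ~ E a a.

(* Each such vertex precedes one of its neighbours in [A], and every vertex of [A] is
   preceded by only finitely many of its neighbours. *)
Lemma colouring_few_infinite_degrees (A : W -> Prop) :
  countable_colouring_number P E -> (forall a, A a -> P a) -> countable_set A ->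
  countable_set (fun w => P w /\ ~ finite_set (fun a => A a /\ E w a)).
Proof.
  intros [R [HR Hfin]] HAP CA.
  apply countable_sub with (fun w => exists a, A a /\ (P w /\ E a w /\ R w a)).
  - intros w [Pw Hinf].
    destruct (colouring_later_neighbour R (fun a => A a /\ E w a) w HR Hfin Pw) with (2 := Hinf)
      as [a [[Aa Ewa] Rwa]].
    + intros a [Aa Ewa]. repeat split; auto. intros ->. exact (E_irr w Ewa).
    + exists a. auto.
  - apply countable_union; auto. intros a Aa. apply finite_countable. apply Hfin. auto.
Qed.

End Colouring.

Lemma chain_bounded_list {X} (lt : X -> X -> Prop) (M : X -> Prop) :
  well_order_on M lt -> (exists x, M x) -> (forall x, M x -> exists y, M y /\ lt x y) ->
  forall l : list X, exists x, M x /\ forall v, In v l -> M v -> lt v x.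
Proof.
  intros WM [x0 Mx0] Hnomax l. induction l as [|a l [x [Mx Hx]]]; [exists x0; split; auto; intros v []|].
  destruct (classic (M a)) as [Ma|Na].
  2:{ exists x. split; auto. intros v [<-|Hv] Mv; [contradiction|auto]. }
  destruct (Hnomax a Ma) as [y [My Hay]].
  destruct (wo_total WM x y Mx My) as [<-|[Hxy|Hyx]].
  - exists x. split; auto. intros v [<-|Hv] Mv; auto.
  - exists y. split; auto. intros v [<-|Hv] Mv; auto. apply (wo_trans WM v x y); auto.
  - exists x. split; auto. intros v [<-|Hv] Mv; [apply (wo_trans WM a y x)|]; auto.
Qed.

Lemma unbounded_chain_cofinal_infinite {X} (lt : X -> X -> Prop) (M L : X -> Prop) :
  well_order_on M lt -> (exists x, M x) -> (forall x, M x -> exists y, M y /\ lt x y) ->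
  (forall x, M x -> exists u, L u /\ M u /\ (u = x \/ lt x u)) -> ~ finite_set L.
Proof.
  intros WM Hne Hnomax Hcof [l Hl].
  destruct (chain_bounded_list lt M WM Hne Hnomax l) as [x [Mx Hx]].
  destruct (Hcof x Mx) as [u [Lu [Mu Hxu]]].
  pose proof (Hx u (Hl u Lu) Mu) as Hux. destruct Hxu as [->|Hxu].
  - exact (wo_irr WM x Mx Hux).
  - exact (wo_asym WM x u Mx Mu Hxu Hux).
Qed.

Section ChainColouring.
Context {X : Type} (C : X -> Prop) (lt E : X -> X -> Prop).
Hypothesis C_wo : well_order_on C lt.
Hypothesis C_segments : forall c, C c -> countable_set (fun x => C x /\ lt x c).
Hypothesis E_sym : forall a b, E a b -> E b a.
Hypothesis E_irr : forall a, ~ E a a.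
Hypothesis E_cofinal : forall c x, C c -> C x -> lt x c ->
  exists u, C u /\ (u = x \/ lt x u) /\ lt u c /\ E u c.

Lemma uncountable_chain_unbounded : ~ countable_set C ->
  forall x, C x -> exists y, C y /\ lt x y.
Proof.
  intros Cunc x Cx.
  destruct (uncountable_inhabited _ (countable_diff C (fun y => (C y /\ lt y x) \/ y = x) Cunc
    (countable_union2 _ _ (C_segments x Cx) (countable_singleton x)))) as [y [Cy Hy]].
  exists y. split; auto. destruct (wo_total C_wo x y Cx Cy) as [->|[H|H]]; tauto.
Qed.

(* Close a point under predecessors, under the finitely many neighbours coloured earlier,
   and under a chosen successor [up]; the least element [c] outside the resulting countable
   set has infinitely many neighbours below it, and one of them is coloured after [c]. *)
Lemma countable_colouring_chain_countable :
  countable_colouring_number C E -> countable_set C.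
Proof.
  intros [R [HR Hfin]]. apply NNPP. intro Cunc.
  destruct (choice_on C (fun x y => C y /\ lt x y)) as [up Hup].
  { destruct (uncountable_inhabited _ Cunc) as [x0 _]. constructor. exact x0. }
  { apply uncountable_chain_unbounded; auto. }
  destruct (uncountable_inhabited _ Cunc) as [x0 Cx0].
  set (op := fun x y => C x /\ ((C y /\ lt y x) \/ (C y /\ E x y /\ R y x) \/ y = up x)).
  set (M := closure op (fun y => y = x0)).
  assert (MC : forall x, M x -> C x).
  { intros x Mx. induction Mx as [x ->|x y _ _ [Cx [[Cy _]|[[Cy _]| ->]]]]; auto. apply Hup; auto. }
  assert (Mcount : countable_set M).
  { apply closure_countable; [|apply countable_singleton].
    intros x. destruct (classic (C x)) as [Cx|Nx]; [|apply countable_empty; intros [y [Cx _]]; auto].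
    apply countable_sub with (fun y => (C y /\ lt y x) \/ (C y /\ E x y /\ R y x) \/ y = up x);
      [unfold op; tauto|].
    apply countable_union2; [|apply countable_union2].
    - auto.
    - apply finite_countable, Hfin; auto.
    - apply countable_singleton. }
  destruct (wo_min C_wo (fun y => C y /\ ~ M y)) as [c [[Cc Nc] Hc]]; [tauto|
    apply uncountable_inhabited, countable_diff; auto|].
  assert (Mlt : forall x, M x -> lt x c).
  { intros x Mx. destruct (wo_total C_wo x c (MC x Mx) Cc) as [->|[H|H]]; [contradiction|auto|].
    exfalso. apply Nc. apply closure_step with x; [auto|]. split; [apply MC|left]; auto. }
  destruct (colouring_later_neighbour C E R (fun u => M u /\ E c u) c HR Hfin Cc) as [u [[Mu Ecu] Rcu]].
  { intros u [Mu Ecu]. split; [apply MC; auto|split; auto]. intros ->. exact (E_irr c Ecu). }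
  { apply (unbounded_chain_cofinal_infinite lt M).
    - apply well_order_on_sub with C; auto.
    - exists x0. apply closure_base. auto.
    - intros x Mx. exists (up x). split; [|apply Hup, MC; auto].
      apply closure_step with x; [auto|]. split; [apply MC|right; right]; auto.
    - intros x Mx. destruct (E_cofinal c x Cc (MC x Mx) (Mlt x Mx)) as [u [Cu [Hxu [Huc Euc]]]].
      assert (Mu : M u).
      { apply NNPP. intro Nu. exact (wo_min_not_lt C_wo _ c u Cc Cu Hc (conj Cu Nu) Huc). }
      exists u. auto. }
  apply Nc. apply closure_step with u; [auto|]. split; [apply MC; auto|right; left; auto].
Qed.

End ChainColouring.

Lemma countable_injective_selection {Y X} (A : Y -> Prop) (S : Y -> X -> Prop) (x0 : X) :
  countable_set A -> (forall y, A y -> ~ finite_set (S y)) ->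
  exists f : Y -> X, (forall y, A y -> S y (f y)) /\
                     (forall y y', A y -> A y' -> f y = f y' -> y = y').
Proof.
  intros [g [_ Hg]] HS.
  set (P := fun k t => exists y, A y /\ g y = k /\ S y t).
  set (chosen := fix chosen (n : nat) : list X :=
         match n with
         | 0 => []
         | Datatypes.S k => epsilon (inhabits x0) (fun t => P k t /\ ~ In t (chosen k)) :: chosen k
         end).
  set (sel := fun k => epsilon (inhabits x0) (fun t => P k t /\ ~ In t (chosen k))).
  assert (Hsel : forall k j, k < j -> In (sel k) (chosen j)).
  { intros k j Hkj. induction Hkj; simpl; auto. }
  assert (Hspec : forall y, A y -> P (g y) (sel (g y)) /\ ~ In (sel (g y)) (chosen (g y))).
  { intros y Ay. apply epsilon_spec. apply NNPP. intro Hn. apply (HS y Ay).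
    exists (chosen (g y)). intros t St. apply NNPP. intro Nt. apply Hn. exists t. split; auto.
    exists y. auto. }
  exists (fun y => sel (g y)). split.
  - intros y Ay. destruct (Hspec y Ay) as [[y' [Ay' [Eg Sy']]] _].
    assert (y' = y) by (apply Hg; auto). subst y'. exact Sy'.
  - intros y y' Ay Ay' E. apply Hg; auto.
    destruct (lt_eq_lt_dec (g y) (g y')) as [[H|H]|H]; auto; exfalso.
    + apply (proj2 (Hspec y' Ay')). rewrite <- E. auto.
    + apply (proj2 (Hspec y Ay)). rewrite E. auto.
Qed.

(** * Order trees and normal semi-partition trees *)

Section OrderTree.
Context {T : Type} (le : T -> T -> Prop).
Hypothesis Htree : order_tree le.

Notation lt := (tlt le).

Lemma tle_refl t : le t t.
Proof. apply Htree. Qed.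
Lemma tle_antisym s t : le s t -> le t s -> s = t.
Proof. apply Htree. Qed.
Lemma tle_trans r s t : le r s -> le s t -> le r t.
Proof. apply Htree. Qed.
Lemma down_wo t : well_order_on (fun s => le s t) lt.
Proof. apply Htree. Qed.

Lemma tlt_le s t : lt s t -> le s t.
Proof. intros [H _]; auto. Qed.
Lemma tlt_irr t : ~ lt t t.
Proof. intros [_ H]; auto. Qed.
Lemma tlt_le_trans r s t : lt r s -> le s t -> lt r t.
Proof.
  intros [H1 N] H2. split; [eapply tle_trans; eauto|]. intros ->. apply N, tle_antisym; auto.
Qed.
Lemma tle_lt_trans r s t : le r s -> lt s t -> lt r t.
Proof.
  intros H1 [H2 N]. split; [eapply tle_trans; eauto|]. intros ->. apply N, tle_antisym; auto.
Qed.
Lemma tlt_trans r s t : lt r s -> lt s t -> lt r t.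
Proof. intros H1 H2. eapply tlt_le_trans; eauto. apply tlt_le; auto. Qed.
Lemma tlt_not_le s t : lt s t -> ~ le t s.
Proof. intros [H N] H2. apply N, tle_antisym; auto. Qed.
Lemma tle_cases s t : le s t -> s = t \/ lt s t.
Proof. intros H. destruct (classic (s = t)); auto. right; split; auto. Qed.

Lemma comparable_below a b c : le a c -> le b c -> le a b \/ le b a.
Proof.
  intros Ha Hb. destruct (wo_total (down_wo c) a b Ha Hb) as [->|[E|E]];
    [left; apply tle_refl|left; apply tlt_le; auto|right; apply tlt_le; auto].
Qed.

Lemma strict_down_wo t : well_order_on (fun s => lt s t) lt.
Proof. apply well_order_on_sub with (fun s => le s t); [apply down_wo|intros s; apply tlt_le]. Qed.

Lemma tlt_wf : well_founded lt.
Proof.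
  intro x. apply NNPP. intro Hn.
  destruct (wo_min (down_wo x) (fun y => le y x /\ ~ Acc lt y)) as [m [[Hm1 Hm2] Hmm]];
    [tauto|exists x; split; auto; apply tle_refl|].
  apply Hm2. constructor. intros y Hy. apply NNPP. intro Hy'.
  apply (wo_min_not_lt (down_wo x) _ m y Hm1 (tle_trans y m x (tlt_le y m Hy) Hm1) Hmm);
    [split|]; auto. apply (tle_trans y m x (tlt_le y m Hy) Hm1).
Qed.

Lemma root_le : exists r, forall t, le r t.
Proof.
  destruct Htree as [_ [_ [_ [[r [Hr1 Hr2]] _]]]].
  exists r. intro t.
  destruct (wo_min (down_wo t) (fun s => le s t)) as [m [Hm Hmm]]; [tauto|exists t; apply tle_refl|].
  replace r with m; [auto|]. apply Hr2. intros s Hs.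
  destruct (Hmm s (tle_trans s m t Hs Hm)) as [E|E]; auto. exfalso. exact (tlt_not_le m s E Hs).
Qed.

Lemma min_outside (S : T -> Prop) a : rooted_subtree le S -> ~ S a ->
  exists t0, le t0 a /\ ~ S t0 /\ forall s, lt s t0 -> S s.
Proof.
  intros HS Ha.
  destruct (wo_min (down_wo a) (fun s => le s a /\ ~ S s)) as [m [[Hm1 Hm2] Hmm]];
    [tauto|exists a; split; auto; apply tle_refl|].
  exists m. repeat split; auto. intros s Hs. apply NNPP. intro Ns.
  assert (Hsa : le s a) by (apply tle_trans with m; auto; apply tlt_le; auto).
  exact (wo_min_not_lt (down_wo a) _ m s Hm1 Hsa Hmm (conj Hsa Ns) Hs).
Qed.

Lemma above_min (S : T -> Prop) t0 a b : ~ S b ->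
  (forall s, lt s t0 -> S s) -> le t0 a -> (le a b \/ le b a) -> le t0 b.
Proof.
  intros Hb Hdown Ha [H|H]; [eapply tle_trans; eauto|].
  destruct (comparable_below t0 b a Ha H) as [E|E]; auto.
  destruct (tle_cases _ _ E) as [->|E']; [apply tle_refl|]. exfalso. apply Hb, Hdown; auto.
Qed.

Definition child (p t : T) : Prop := lt p t /\ forall s, lt s t -> le s p.

Lemma child_or_limit t : (exists p, child p t) \/ (forall s, lt s t -> exists s', lt s s' /\ lt s' t).
Proof.
  destruct (classic (exists p, lt p t /\ forall s, lt s t -> le s p)) as [H|H]; [now left|right].
  intros s Hs. apply NNPP. intro Hn. apply H. exists s. split; auto.
  intros r Hr. destruct (comparable_below r s t (tlt_le _ _ Hr) (tlt_le _ _ Hs)) as [E|E]; auto.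
  destruct (tle_cases _ _ E) as [<-|E']; [apply tle_refl|]. exfalso. eauto.
Qed.

Section NormalTree.
Context {V : Type} (adj : V -> V -> Prop) (Vt : T -> V -> Prop).
Hypothesis Hsimple : simple_graph adj.
Hypothesis Hnpt : normal_semi_partition_tree adj le Vt.

Notation G := (parts_union Vt).
Notation inU := (parts_union Vt (fun _ => True)).

Lemma adj_sym a b : adj a b -> adj b a.
Proof. apply Hsimple. Qed.

Lemma part_inhabited t : exists x, Vt t x.
Proof. apply Hnpt. Qed.
Lemma part_disj s t x : Vt s x -> Vt t x -> s = t.
Proof. destruct Hnpt as [_ [H _]]. eauto. Qed.
Lemma part_connected t : connected_in adj (Vt t).
Proof. apply Hnpt. Qed.
Lemma edge_comparable s t x y : s <> t -> Vt s x -> Vt t y -> adj x y -> le s t \/ le t s.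
Proof. destruct Hnpt as [_ [_ [_ [[H _] _]]]]. intros; apply H. split; eauto. Qed.
Lemma edge_cofinal s t : lt s t -> exists u, le s u /\ lt u t /\ exists x y, Vt u x /\ Vt t y /\ adj x y.
Proof.
  destruct Hnpt as [_ [_ [_ [[_ H] _]]]]. intros Hst.
  destruct (H s t Hst) as [u [H1 [H2 [_ H3]]]]. eauto.
Qed.

Lemma part_inj s t : Vt s = Vt t -> s = t.
Proof. intros E. destruct (part_inhabited s) as [x Hx]. apply (part_disj s t x); congruence. Qed.

Lemma outside_walk_comparable c b x w l : Vt c x -> Vt b w -> walk adj x (l ++ [w]) ->
  Forall (fun v => ~ inU v) l -> le c b \/ le b c.
Proof.
  intros Hx Hw W F.
  destruct (classic (c = b)) as [->|Ncb]; [left; apply tle_refl|].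
  destruct (classic (l = [])) as [->|Nl].
  { apply walk_snoc in W as [_ Hxw]. eapply edge_comparable; eauto. }
  assert (W2 : walk (fun a b => adj a b /\ ~ (inU a /\ inU b)) x (l ++ [w])).
  { clear - W F Nl. revert x W. induction l as [|a l IH]; [contradiction|]. intros x [Hxa W].
    inversion F as [|? ? Na F']; subst. split; [split; tauto|].
    destruct l as [|b l]; [simpl in *; split; [split; tauto|auto]|apply IH; auto; discriminate]. }
  destruct (walk_shorten _ x _ W2) as [l' [W' [E' [N' I']]]].
  rewrite last_last in E'.
  assert (Nl' : l' <> []) by (intros ->; simpl in E'; subst; apply Ncb; eapply part_disj; eauto).
  destruct Hnpt as [_ [_ [_ [_ Hpath]]]].
  apply (Hpath x l' c b Nl' N' W' Hx); [rewrite E'; auto|].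
  apply Forall_forall. intros v Hv.
  assert (Nvw : v <> w).
  { intros ->. rewrite (app_removelast_last x Nl'), E' in N'.
    inversion N' as [|? ? _ N'']. apply NoDup_remove_2 in N''. apply N''.
    rewrite app_nil_r. auto. }
  destruct (in_app_or _ _ _ (I' v (in_removelast _ _ Hv))) as [Hv1|[<-|[]]]; [|congruence].
  rewrite Forall_forall in F. auto.
Qed.

Section MinimalOutside.
Variables (S : T -> Prop) (t0 : T).
Hypothesis S_rooted : rooted_subtree le S.
Hypothesis t0_out : ~ S t0.
Hypothesis t0_min : forall s, lt s t0 -> S s.

(* Between two consecutive vertices of [inU] the walk runs outside [inU], so consecutive
   parts are comparable, and none of them lies in [S]. *)
Lemma avoiding_walk_above n l u a : length l <= n -> walk adj u l -> Forall (fun w => ~ G S w) l ->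
  Vt a u -> le t0 a -> forall v b, In v l -> Vt b v -> le t0 b.
Proof.
  revert l u a. induction n as [|n IH]; intros l u a Hlen W F Hu Ha v b Hv Hb.
  { destruct l; simpl in Hlen; [destruct Hv|lia]. }
  destruct (split_first (fun x => inU x) l) as [H|[l1 [w [l2 [-> [F1 [b' [_ Hw]]]]]]]].
  - rewrite Forall_forall in H. exfalso. apply (H v Hv). exists b; auto.
  - apply walk_app in W as [W1 W2]. simpl in W2.
    apply Forall_app in F as [_ F2]. inversion F2 as [|? ? Nw F2']; subst.
    assert (Nb' : ~ S b') by (intro Sb'; apply Nw; exists b'; auto).
    assert (Hb' : le t0 b').
    { apply (above_min S t0 a b'); auto. apply (outside_walk_comparable a b' u w l1); auto.
      apply walk_snoc. tauto. }
    apply in_app_or in Hv as [Hv|[<-|Hv]].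
    + rewrite Forall_forall in F1. exfalso. apply (F1 v Hv). exists b; auto.
    + rewrite (part_disj b b' w Hb Hw). auto.
    + apply (IH l2 w b') with (v := v); try tauto.
      rewrite length_app in Hlen. simpl in Hlen. lia.
Qed.

Lemma avoiding_walk_neighbour_below u a l y :
  Vt a u -> le t0 a -> walk adj u l -> Forall (fun w => ~ G S w) l ->
  adj (last l u) y -> G S y -> exists s, lt s t0 /\ Vt s y.
Proof.
  intros Hu Ha W F Hy [s [Ss Hs]].
  destruct (split_last (fun x => inU x) (u :: l)) as [l1 [w [l2 [E [F2 [b [_ Hw]]]]]]].
  { exists u. split; [left; auto|exists a; auto]. }
  assert (Hwalk : walk adj w l2 /\ last l2 w = last l u /\ le t0 b).
  { destruct l1 as [|c l1']; injection E as -> E2.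
    - subst. rewrite (part_disj b a w Hw Hu). auto.
    - subst. pose proof W as W0. apply walk_app in W0 as [_ W2]. simpl in W2.
      split; [tauto|split; [symmetry; apply last_app_cons|]].
      apply (avoiding_walk_above (length (l1' ++ w :: l2)) (l1' ++ w :: l2) c a) with (v := w); auto.
      + auto.
      + apply in_or_app. simpl. auto. }
  destruct Hwalk as [W2 [E2 Hb]].
  assert (Nb : ~ S b) by (intro Sb; apply t0_out; eapply S_rooted; eauto).
  assert (Hsb : le s b).
  { destruct (outside_walk_comparable b s w y l2) as [H|H]; auto.
    - apply walk_snoc. rewrite E2. auto.
    - exfalso. apply Nb. eapply S_rooted; eauto. }
  exists s. split; auto.
  destruct (comparable_below s t0 b Hsb Hb) as [H|H].
  - split; auto. intros ->. auto.
  - exfalso. apply t0_out. eapply S_rooted; eauto.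
Qed.

End MinimalOutside.

Lemma part_above_not_below t0 b w : le t0 b -> Vt b w -> ~ G (fun s => lt s t0) w.
Proof.
  intros Hb Hw [s [Hs Hsw]]. rewrite (part_disj s b w Hsw Hw) in Hs. eapply tlt_not_le; eauto.
Qed.

Lemma part_above_reachable t0 x0 : Vt t0 x0 -> forall b, le t0 b -> forall v, Vt b v ->
  reach_avoiding adj (G (fun s => lt s t0)) x0 v.
Proof.
  intros Hx0 b. induction (tlt_wf b) as [b _ IH]. intros Hb v Hv.
  destruct (tle_cases _ _ Hb) as [<-|E].
  - apply reach_within with (Vt t0).
    + intros w Hw. apply (part_above_not_below t0 t0); [apply tle_refl|auto].
    + apply part_connected; auto.
  - destruct (edge_cofinal t0 b E) as [u [Hu1 [Hu2 [x [y [Hx [Hy Hxy]]]]]]].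
    apply reach_trans with y.
    + apply reach_step with x; [apply (IH u Hu2 Hu1 x Hx)|auto|apply (part_above_not_below t0 b); auto].
    + apply reach_within with (Vt b); [intros w Hw; apply (part_above_not_below t0 b); auto|].
      apply part_connected; auto.
Qed.

Variables (U : V -> Prop) (xr : T -> V).
Hypothesis Hxr : forall t, Vt t (xr t) /\ U (xr t).
Hypothesis HUin : forall u, U u -> inU u.

Definition attachments (t : T) (y : V) : Prop :=
  G (fun s => lt s t) y /\ exists z, reach_avoiding adj (G (fun s => lt s t)) (xr t) z /\ adj z y.

Definition bad (t : T) : Prop := ~ finite_set (attachments t).

Lemma finite_adhesion_of_good_minimal (S : T -> Prop) : rooted_subtree le S ->
  (forall t, ~ S t -> (forall s, lt s t -> S s) -> ~ bad t) ->
  finite_adhesion_towards adj (G S) U.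
Proof.
  intros HS Hmin u Uu Nu.
  destruct (HUin u Uu) as [a [_ Hua]].
  assert (Na : ~ S a) by (intro Sa; apply Nu; exists a; auto).
  destruct (min_outside S a HS Na) as [t0 [Ht0a [Nt0 Hdown]]].
  apply finite_sub with (attachments t0); [|apply NNPP, (Hmin t0 Nt0 Hdown)].
  intros y [Gy [z [[l [W [<- F]]] Hzy]]]. split.
  - destruct (avoiding_walk_neighbour_below S t0 HS Nt0 Hdown u a l y) as [s [Hs Hsy]]; auto.
    exists s. auto.
  - exists (last l u). split; auto. apply reach_trans with u.
    + apply (part_above_reachable t0 (xr t0) (proj1 (Hxr t0)) a Ht0a u Hua).
    + apply reach_mono with (G S); [intros w [s [Hs Hsw]]; exists s; auto|exists l; auto].
Qed.

Lemma minor_adj_sym X Y : minor_adj adj X Y -> minor_adj adj Y X.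
Proof. intros [N [x [y [Hx [Hy Hxy]]]]]. split; [auto|]. exists y, x. auto using adj_sym. Qed.

Definition part_adj (s t : T) : Prop := minor_adj adj (Vt s) (Vt t).

Lemma part_adj_sym s t : part_adj s t -> part_adj t s.
Proof. apply minor_adj_sym. Qed.

Lemma part_adj_irr t : ~ part_adj t t.
Proof. intros [N _]. auto. Qed.

Lemma edge_part_adj u c x y : u <> c -> Vt u x -> Vt c y -> adj x y -> part_adj u c.
Proof. intros N Hx Hy Hxy. split; [intro E; apply N, part_inj; auto|]. exists x, y. auto. Qed.

Hypothesis Hminor : forall Bs : (V -> Prop) -> Prop,
  branch_sets adj Bs -> rooted_branch_sets U Bs ->
  (forall X, Bs X -> countable_set X) ->
  countable_colouring_number Bs (minor_adj adj).

Lemma parts_colouring (Q : T -> Prop) : (forall s, Q s -> countable_set (Vt s)) ->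
  countable_colouring_number Q part_adj.
Proof.
  intros HQ.
  destruct (Hminor (fun Z => exists s, Q s /\ Z = Vt s)) as [R [HR Hfin]].
  - split; [|split].
    + intros Z [s [_ ->]]. apply part_inhabited.
    + intros Z Y x [s [_ ->]] [t [_ ->]] N H1 H2. apply N. rewrite (part_disj s t x H1 H2). auto.
    + intros Z [s [_ ->]]. apply part_connected.
  - intros Z [s [_ ->]]. exists (xr s). apply Hxr.
  - intros Z [s [Qs ->]]. auto.
  - exists (fun a b => R (Vt a) (Vt b)). split.
    + apply well_order_on_pullback; auto. intros a b _ _. apply part_inj.
    + intros s Qs. apply (finite_inj Vt _ (fun w' =>
        (exists s, Q s /\ w' = Vt s) /\ minor_adj adj (Vt s) w' /\ R w' (Vt s))
        (fun a b _ _ => part_inj a b)); [|apply Hfin; eauto].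
      intros s' [Qs' [Hadj Hs']]. split; eauto.
Qed.

Hypothesis Hslim : slim le Vt.

Lemma part_countable_of_height s : countable_set (fun r => lt r s) -> countable_set (Vt s).
Proof.
  intros [g [_ Hg]]. eapply card_le_trans; [apply Hslim|].
  exists (fun z => match z with inl r => 2 * g r | inr n => S (2 * n) end). split; [now auto|].
  intros [a|a] [b|b] Ha Hb E; try lia.
  - f_equal. apply Hg; auto. lia.
  - f_equal. lia.
Qed.

(* The nodes below [t] of countable height form a chain in which every node is adjacent
   to cofinally many predecessors, so by the colouring hypothesis this chain is countable. *)
Lemma height_countable t : countable_set (fun s => lt s t).
Proof.
  set (C := fun s => lt s t /\ countable_set (fun r => lt r s)).
  assert (CC : countable_set C).
  { apply (countable_colouring_chain_countable C lt part_adj).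
    - apply well_order_on_sub with (fun s => lt s t); [apply strict_down_wo|intros s [Hs _]; auto].
    - intros c [_ Hc]. apply countable_sub with (fun r => lt r c); [tauto|auto].
    - apply part_adj_sym.
    - apply part_adj_irr.
    - intros c x [Hct Hc] _ Hxc.
      destruct (edge_cofinal x c Hxc) as [u [Hxu [Huc [a [b [Ha [Hb Hab]]]]]]].
      exists u. split; [split|split; [destruct (tle_cases _ _ Hxu); auto|split; auto]].
      + exact (tlt_trans u c t Huc Hct).
      + apply countable_sub with (fun r => lt r c); [intros r Hr; exact (tlt_trans r u c Hr Huc)|auto].
      + apply (edge_part_adj u c a b); auto. intros ->. exact (tlt_irr c Huc).
    - apply parts_colouring. intros s [_ Hs]. apply part_countable_of_height. auto. }
  apply countable_sub with C; auto. intros s Hst. split; auto. apply NNPP. intro Hs.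
  destruct (wo_min (down_wo t) (fun s => le s t /\ lt s t /\ ~ countable_set (fun r => lt r s)))
    as [s0 [[_ [Hs0 Ns0]] Hm]]; [tauto|exists s; split; [apply tlt_le|]; auto|].
  apply Ns0. apply countable_sub with C; auto.
  intros r Hr. split; [exact (tlt_trans r s0 t Hr Hs0)|]. apply NNPP. intro Nr.
  assert (Hrt : lt r t) by exact (tlt_trans r s0 t Hr Hs0).
  exact (wo_min_not_lt (down_wo t) _ s0 r (tlt_le _ _ Hs0) (tlt_le _ _ Hrt) Hm
           (conj (tlt_le _ _ Hrt) (conj Hrt Nr)) Hr).
Qed.

Lemma part_countable t : countable_set (Vt t).
Proof. apply part_countable_of_height, height_countable. Qed.

Section Children.
Variable p : T.

Let N := G (fun s => le s p).
Let D (t : T) (v : V) := reach_avoiding adj N (xr t) v.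
Let Nt (t : T) (y : V) := N y /\ exists z, D t z /\ adj z y.

Lemma parts_below_countable : countable_set N.
Proof.
  apply countable_sub with (fun x => exists s, (fun s => lt s p \/ s = p) s /\ Vt s x).
  - intros x [s [Hs Hx]]. exists s. split; auto. destruct (tle_cases _ _ Hs); auto.
  - apply countable_union; [|intros s _; apply part_countable].
    apply countable_union2; [apply height_countable|apply countable_singleton].
Qed.

Lemma child_below t : child p t -> forall v, G (fun s => lt s t) v <-> N v.
Proof.
  intros [H1 H2] v. split; intros [s [Hs Hv]]; exists s; split; auto. eapply tle_lt_trans; eauto.
Qed.

Lemma root_not_below t : child p t -> ~ N (xr t).
Proof.
  intros [Hpt _] [s [Hs Hv]]. rewrite (part_disj s t (xr t) Hv (proj1 (Hxr t))) in Hs.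
  exact (tlt_not_le p t Hpt Hs).
Qed.

Lemma component_not_below t v : child p t -> D t v -> ~ N v.
Proof.
  intros Ht [l [W [<- F]]]. destruct (last_in_or l (xr t)) as [->|E]; [apply root_not_below; auto|].
  rewrite Forall_forall in F. auto.
Qed.

Lemma attachments_child t : child p t -> forall y, attachments t y <-> Nt t y.
Proof.
  intros Ht y. unfold attachments, Nt, D.
  split; intros [Gy [z [Rz Hz]]]; (split; [apply (child_below t Ht); auto|]);
    exists z; (split; [|auto]); eapply reach_mono; try exact Rz;
    intros v Hv; apply (child_below t Ht); auto.
Qed.

(* Two children in one component of [G - N] would be comparable by the last axiom of a
   normal semi-partition tree, applied along the connecting walk. *)
Lemma component_disj t t' z : child p t -> child p t' -> D t z -> D t' z -> t = t'.
Proof.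
  intros Ht Ht' Hz Hz'.
  assert (Hr : reach_avoiding adj (G (fun s => lt s t)) (xr t) (xr t')).
  { eapply reach_mono; [intros v Hv; exact (proj1 (child_below t Ht v) Hv)|].
    apply reach_trans with z; auto. apply reach_sym; [apply adj_sym|apply root_not_below; auto|auto]. }
  destruct Hr as [l [W [E F]]].
  assert (Hle : le t t').
  { destruct (last_in_or l (xr t)) as [E1|E1].
    - rewrite E in E1. rewrite (part_disj t t' (xr t) (proj1 (Hxr t))); [apply tle_refl|].
      rewrite <- E1. apply Hxr.
    - apply (avoiding_walk_above (fun s => lt s t) t (fun s Hs => Hs) (length l) l (xr t) t (le_n _)
        W F (proj1 (Hxr t)) (tle_refl t)
        (xr t')); [rewrite <- E; auto|apply Hxr]. }
  destruct (tle_cases _ _ Hle) as [E2|E2]; auto.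
  exfalso. destruct Ht as [Hpt _], Ht' as [_ H']. exact (tlt_not_le p t Hpt (H' t E2)).
Qed.

Definition hull (t : T) (Y W : V -> Prop) : Prop :=
  W (xr t) /\ countable_set W /\ connected_in adj W /\ (forall v, W v -> D t v) /\
  forall y, Y y -> exists z, W z /\ adj z y.

Lemma hull_exists t (Y : V -> Prop) : (forall y, Y y -> Nt t y) -> exists W, hull t Y W.
Proof.
  intros HY. destruct (countable_connected_hull adj adj_sym N Y (xr t)) as [W HW].
  - apply countable_sub with N; [intros y Hy; apply HY; auto|apply parts_below_countable].
  - intros y Hy. apply HY. auto.
  - exists W. exact HW.
Qed.

Section AttachmentMinor.
Variables (N' : V -> Prop) (alpha : V -> T) (B : T -> Prop) (Wy : V -> V -> Prop) (Wt : T -> V -> Prop).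
Hypothesis N'_below : forall y, N' y -> N y.
Hypothesis N'_countable : countable_set N'.
Hypothesis alpha_child : forall y, N' y -> child p (alpha y).
Hypothesis alpha_inj : forall y y', N' y -> N' y' -> alpha y = alpha y' -> y = y'.
Hypothesis B_child : forall t, B t -> child p t.
Hypothesis B_bad : forall t, B t -> bad t.
Hypothesis B_attach : forall t y, B t -> Nt t y -> N' y.
Hypothesis B_fresh : forall t y, B t -> N' y -> alpha y <> t.
Hypothesis Wy_hull : forall y, N' y -> hull (alpha y) (fun v => v = y) (Wy y).
Hypothesis Wt_hull : forall t, B t -> hull t (Nt t) (Wt t).

Let Y (y v : V) : Prop := Wy y v \/ v = y.
Let Bs (Z : V -> Prop) : Prop := (exists y, N' y /\ Z = Y y) \/ (exists t, B t /\ Z = Wt t).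

Lemma attachment_piece y v : N' y -> Y y v -> v = y \/ D (alpha y) v.
Proof. intros Ny [Hv| ->]; [right; apply (Wy_hull y Ny); auto|auto]. Qed.

Lemma attachment_piece_below y v : N' y -> Y y v -> N v -> v = y.
Proof.
  intros Ny Hv Nv. destruct (attachment_piece y v Ny Hv) as [->|Dv]; auto.
  exfalso. exact (component_not_below _ v (alpha_child y Ny) Dv Nv).
Qed.

Lemma attachment_disjoint Z Z' x : Bs Z -> Bs Z' -> Z <> Z' -> Z x -> Z' x -> False.
Proof.
  intros [[y [Ny ->]]|[t [Bt ->]]] [[y' [Ny' ->]]|[t' [Bt' ->]]] NZ Hx Hx'; apply NZ.
  - destruct (attachment_piece y x Ny Hx) as [->|Dx].
    + rewrite (attachment_piece_below y' y Ny' Hx' (N'_below y Ny)). auto.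
    + destruct (attachment_piece y' x Ny' Hx') as [->|Dx'].
      * exfalso. exact (component_not_below _ _ (alpha_child y Ny) Dx (N'_below y' Ny')).
      * rewrite (alpha_inj y y'); auto. apply (component_disj _ _ x); auto.
  - assert (Dx' : D t' x) by (apply (Wt_hull t' Bt'); auto).
    destruct (attachment_piece y x Ny Hx) as [->|Dx].
    + exfalso. exact (component_not_below _ _ (B_child t' Bt') Dx' (N'_below y Ny)).
    + exfalso. apply (B_fresh t' y Bt' Ny). apply (component_disj _ _ x); auto.
  - assert (Dx : D t x) by (apply (Wt_hull t Bt); auto).
    destruct (attachment_piece y' x Ny' Hx') as [->|Dx'].
    + exfalso. exact (component_not_below _ _ (B_child t Bt) Dx (N'_below y' Ny')).
    + exfalso. apply (B_fresh t y' Bt Ny'). apply (component_disj _ _ x); auto.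
  - f_equal. apply (component_disj _ _ x); auto; [apply (Wt_hull t Bt)|apply (Wt_hull t' Bt')]; auto.
Qed.

Lemma attachment_branch_sets : branch_sets adj Bs.
Proof.
  split; [|split; [exact attachment_disjoint|]].
  - intros Z [[y [_ ->]]|[t [Bt ->]]]; [exists y; right; auto|exists (xr t); apply (Wt_hull t Bt)].
  - intros Z [[y [Ny ->]]|[t [Bt ->]]]; [|apply (Wt_hull t Bt)].
    destruct (Wy_hull y Ny) as [_ [_ [Hc [_ Htouch]]]]. destruct (Htouch y eq_refl) as [z [Hz Hzy]].
    exact (connected_in_add adj adj_sym _ z y Hc Hz Hzy).
Qed.

Lemma attachment_rooted : rooted_branch_sets U Bs.
Proof.
  intros Z [[y [Ny ->]]|[t [Bt ->]]].
  - exists (xr (alpha y)). split; [left; apply (Wy_hull y Ny)|apply Hxr].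
  - exists (xr t). split; [apply (Wt_hull t Bt)|apply Hxr].
Qed.

Lemma attachment_countable Z : Bs Z -> countable_set Z.
Proof.
  intros [[y [Ny ->]]|[t [Bt ->]]]; [|apply (Wt_hull t Bt)].
  apply countable_union2; [apply (Wy_hull y Ny)|apply countable_singleton].
Qed.

Lemma attached_piece_adj t y : B t -> Nt t y -> minor_adj adj (Wt t) (Y y).
Proof.
  intros Bt Hy. destruct (Wt_hull t Bt) as [_ [_ [_ [HD Htouch]]]]. split.
  - intros E. assert (Wy' : Wt t y) by (rewrite E; right; auto).
    exact (component_not_below t y (B_child t Bt) (HD y Wy') (proj1 Hy)).
  - destruct (Htouch y Hy) as [z [Hz Hzy]]. exists z, y. unfold Y. auto.
Qed.

(* Every [Wt t] has infinitely many neighbours among the countably many [Y y], so by the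
   colouring hypothesis there are only countably many [t]. *)
Lemma attachment_family_countable : countable_set B.
Proof.
  set (A := fun Z => exists y, N' y /\ Z = Y y).
  assert (CA : countable_set A).
  { apply countable_sub with (fun Z => exists y, N' y /\ Y y = Z);
      [intros Z [y [Ny ->]]; eauto|apply countable_image; auto]. }
  pose proof (colouring_few_infinite_degrees Bs (minor_adj adj) minor_adj_sym
    (fun Z H => proj1 H eq_refl) A
    (Hminor Bs attachment_branch_sets attachment_rooted attachment_countable)
    (fun Z HZ => or_introl HZ) CA) as HC.
  eapply card_le_trans; [|exact HC]. exists Wt. split.
  - intros t Bt. split; [right; eauto|]. intros Hfin. apply (B_bad t Bt).
    apply (finite_sub _ (Nt t)); [intros y; apply (attachments_child t (B_child t Bt))|].
    apply (finite_inj Y (Nt t) (fun a => A a /\ minor_adj adj (Wt t) a)); [|intros y Hy; split;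
      [exists y; split; eauto|apply attached_piece_adj; auto]|exact Hfin].
    intros y y' Hy Hy' E. apply (attachment_piece_below y' y (B_attach t y' Bt Hy')); [|apply Hy].
    rewrite <- E. right. auto.
  - intros t t' Bt Bt' E. apply (component_disj t t' (xr t)); auto; [apply reach_refl|].
    apply (Wt_hull t' Bt'). rewrite <- E. apply (Wt_hull t Bt).
Qed.

End AttachmentMinor.

(* Otherwise some countably many [y] in [N] are attached to uncountably many bad children;
   giving each such [y] its own child [alpha y] yields the minor of
   [attachment_family_countable] on the remaining uncountably many bad children. *)
Lemma bad_children_countable : countable_set (fun t => child p t /\ bad t).
Proof.
  apply NNPP. intro Hunc.
  set (Ch := fun y t => child p t /\ bad t /\ Nt t y).
  set (N' := fun y => N y /\ ~ countable_set (Ch y)).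
  set (B' := fun t => child p t /\ bad t /\ forall y, Nt t y -> N' y).
  assert (CN' : countable_set N')
    by (apply countable_sub with N; [intros y [H _]; auto|apply parts_below_countable]).
  assert (B'unc : ~ countable_set B').
  { intro HB'. apply Hunc.
    apply countable_sub with (fun t => B' t \/ exists y, (N y /\ countable_set (Ch y)) /\ Ch y t).
    - intros t [Ct Bt]. destruct (classic (B' t)) as [H|H]; [now left|right].
      apply NNPP. intro Hn. apply H. split; [auto|split; [auto|]]. intros y Hy. split; [apply Hy|].
      intro Cy. apply Hn. exists y. split; [split; [apply Hy|auto]|split; [auto|split; auto]].
    - apply countable_union2; auto.
      apply countable_union; [apply countable_sub with N; [tauto|apply parts_below_countable]|tauto]. }
  destruct (countable_injective_selection N' Ch p CN') as [alpha [Halpha alpha_inj]].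
  { intros y [_ Hy] Hfin. apply Hy, finite_countable; auto. }
  set (B := fun t => B' t /\ forall y, N' y -> alpha y <> t).
  assert (Bunc : ~ countable_set B).
  { intro HB. apply B'unc. apply countable_sub with (fun t => B t \/ exists y, N' y /\ alpha y = t).
    - intros t Bt. destruct (classic (exists y, N' y /\ alpha y = t)) as [H|H]; [now right|left].
      split; auto. intros y Ny E. apply H. eauto.
    - apply countable_union2; auto. apply countable_image; auto. }
  destruct (choice_on N' (fun y W => hull (alpha y) (fun v => v = y) W)) as [Wy HWy];
    [constructor; exact (fun _ => False)| |].
  { intros y Ny. apply hull_exists. intros v ->. apply (Halpha y Ny). }
  destruct (choice_on B (fun t W => hull t (Nt t) W)) as [Wt HWt];
    [constructor; exact (fun _ => False)|intros t Bt; apply hull_exists; auto|].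
  apply Bunc. apply (attachment_family_countable N' alpha B Wy Wt); auto.
  - intros y [Ny _]. auto.
  - intros y Ny. apply (Halpha y Ny).
  - intros t [[Ct _] _]. auto.
  - intros t [[_ [Bt _]] _]. auto.
  - intros t y [[_ [_ HN']] _]. auto.
  - intros t y [_ Hfresh]. auto.
Qed.

End Children.

Hypothesis HUunc : ~ countable_set U.

Lemma tree_uncountable : ~ countable_set (fun _ : T => True).
Proof.
  intros HT. apply HUunc. apply countable_sub with (fun x => exists t, True /\ Vt t x).
  - intros u Uu. destruct (HUin u Uu) as [t [_ H]]. eauto.
  - apply countable_union; auto. intros t _. apply part_countable.
Qed.

Section Filtration.
Variable R0 : T -> T -> Prop.
Hypothesis R0_wo : well_order_on (fun _ => True) R0.
Hypothesis R0_fin : forall s, True -> finite_set (fun s' => True /\ part_adj s s' /\ R0 s' s).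

Definition tree_op (x y : T) : Prop :=
  le y x \/ (part_adj x y /\ R0 y x) \/ (child x y /\ bad y).

Lemma tree_op_countable x : countable_set (tree_op x).
Proof.
  apply countable_union2; [|apply countable_union2].
  - apply countable_sub with (fun y => lt y x \/ y = x).
    + intros y H. destruct (tle_cases _ _ H); auto.
    + apply countable_union2; [apply height_countable|apply countable_singleton].
  - apply finite_countable. apply finite_sub with (fun s' => True /\ part_adj x s' /\ R0 s' x);
      [tauto|apply R0_fin; auto].
  - apply bad_children_countable.
Qed.

Lemma tree_op_closure_rooted Z : rooted_subtree le (closure tree_op Z).
Proof. intros s t Ht Hst. apply closure_step with t; auto. left; auto. Qed.

(* A minimal node [t] outside the closure is not bad: a successor node would be a bad child
   of its predecessor, and a limit node has infinitely many neighbouring parts below it, one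
   of them coloured after [V_t]; either way [t] would lie in the closure. *)
Lemma tree_op_closure_finite_adhesion Z : (exists x, Z x) ->
  finite_adhesion_towards adj (G (closure tree_op Z)) U.
Proof.
  intros [x0 Hx0]. apply finite_adhesion_of_good_minimal; [apply tree_op_closure_rooted|].
  intros t Nt Hdown Bad. destruct root_le as [r Hr].
  assert (Hrt : lt r t).
  { destruct (tle_cases _ _ (Hr t)) as [<-|E]; auto. exfalso. apply Nt.
    apply (tree_op_closure_rooted Z r x0); [apply closure_base; auto|apply Hr]. }
  destruct (child_or_limit t) as [[q Hq]|Hlim].
  - apply Nt. apply (closure_step tree_op Z q t); [apply Hdown, Hq|]. right; right. auto.
  - destruct (colouring_later_neighbour (fun _ => True) part_adj R0 (fun u => lt u t /\ part_adj t u) t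
        R0_wo R0_fin I)
      as [u [[Hut Hadj] Ru]].
    + intros u [Hut Hadj]. split; [auto|split; [auto|]]. intros ->. exact (tlt_irr t Hut).
    + apply (unbounded_chain_cofinal_infinite lt (fun s => lt s t)); [apply strict_down_wo|eauto| |].
      { intros s Hs. destruct (Hlim s Hs) as [s' [? ?]]. eauto. }
      intros x Hx. destruct (edge_cofinal x t Hx) as [u [Hxu [Hut [a [b [Ha [Hb Hab]]]]]]].
      exists u. split; [split; [exact Hut|]|split; [exact Hut|destruct (tle_cases _ _ Hxu); auto]].
      apply part_adj_sym, (edge_part_adj u t a b); auto. intros ->. exact (tlt_irr t Hut).
    + apply Nt. apply (closure_step tree_op Z u t); [apply Hdown; auto|]. right; left.
      split; [apply part_adj_sym|]; auto.
Qed.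

Lemma tree_op_closure_card_lt {K} (ltK : K -> K -> Prop) (Z B C : T -> Prop) k :
  initial_ordinal_of ltK (fun _ : T => True) ->
  (forall t, Z t -> B t \/ C t) -> countable_set B -> card_le C (fun k' => ltK k' k) ->
  card_lt (closure tree_op Z) (fun _ : T => True).
Proof.
  intros [_ [[HKT _] Hseg]] HZ CB HC. split; [apply card_le_sub; auto|]. intro HT.
  destruct (classic (finite_set (fun k' => ltK k' k))) as [Kfin|Kinf].
  - apply tree_uncountable. eapply card_le_trans; [exact HT|].
    apply closure_countable; [apply tree_op_countable|].
    apply countable_sub with (fun t => B t \/ C t); auto.
    apply countable_union2; auto. apply finite_countable. eapply finite_card_le; eauto.
  - apply (proj2 (Hseg k)).
    eapply card_le_trans; [exact HKT|]. eapply card_le_trans; [exact HT|].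
    eapply card_le_trans; [apply closure_card_le, tree_op_countable|].
    apply (card_le_times_list _ Z B C Kinf); auto.
Qed.

(* [T_i] is the closure of a fixed countably infinite set together with the nodes whose
   index in the initial ordinal [K] lies below [f i'] for some [i' < i]. *)
Lemma filtration_exists (K : Type) (ltK : K -> K -> Prop) (I : Type) (ltI : I -> I -> Prop) :
  initial_ordinal_of ltK (fun _ : T => True) -> cofinality_order ltI ltK ->
  exists Ti : I -> T -> Prop,
    (forall i, rooted_subtree le (Ti i)) /\
    (forall i, ~ finite_set (Ti i)) /\
    (forall i, card_lt (Ti i) (fun _ : T => True)) /\
    (forall i j t, ltI i j -> Ti i t -> Ti j t) /\
    (forall t, exists i, Ti i t) /\
    (forall l, is_limit ltI l -> forall t, Ti l t <-> exists i, ltI i l /\ Ti i t) /\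
    (forall i, finite_adhesion_towards adj (G (Ti i)) U).
Proof.
  intros HK HI.
  pose proof HK as [WK [[_ [phi [_ Hphi]]] _]]. pose proof HI as [WI [[f [Hfinc Hfcof]] _]].
  assert (Tinf : ~ finite_set (fun _ : T => True))
    by (intro H; apply tree_uncountable, finite_countable, H).
  pose proof (cofinality_no_max ltI ltK WK HI (initial_ordinal_no_max ltK _ HK Tinf)) as Imax.
  destruct (infinite_inj_seq _ Tinf) as [sq [_ Hsq]].
  set (A := fun i t => exists i', ltI i' i /\ (phi t = f i' \/ ltK (phi t) (f i'))).
  set (Z := fun i t => (exists n, sq n = t) \/ A i t).
  assert (Zmono : forall i j, ltI i j -> forall t, Z i t -> Z j t).
  { intros i j Hij t [H|[i' [Hi' H]]]; [now left|right]. exists i'. split; auto.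
    apply (wo_trans WI _ i); auto. }
  exists (fun i => closure tree_op (Z i)). split; [|split; [|split; [|split; [|split; [|split]]]]].
  - intro i. apply tree_op_closure_rooted.
  - intros i Hfin. apply nat_not_finite.
    apply (finite_inj sq _ (closure tree_op (Z i)) (fun n m _ _ => Hsq n m)); [|exact Hfin].
    intros n _. apply closure_base. left. eauto.
  - intros i.
    apply (tree_op_closure_card_lt ltK (Z i) (fun t => exists n, sq n = t) (A i) (f i) HK); auto.
    + apply countable_sub with (fun t => exists n, True /\ sq n = t); [intros t [n E]; eauto|].
      apply countable_image, countable_nat.
    + exists phi. split; [|intros a b _ _ E; apply Hphi; auto].
      intros t [i' [Hi' [->|E]]]; [apply Hfinc; auto|apply (wo_trans WK _ (f i')); auto].
  - intros i j t Hij. apply closure_mono. apply Zmono. auto.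
  - intro t. destruct (Hfcof (phi t)) as [c [[i' <-] Hc]].
    destruct (Imax i') as [i Hi]. exists i. apply closure_base. right. exists i'. auto.
  - intros l [[i0 Hi0] Hlim] t. split.
    + intros Ht. destruct (closure_from_point _ _ _ Ht) as [x0 [[Hx0|[i' [Hi' Hx0]]] H1]].
      * exists i0. split; auto. apply (closure_mono _ (fun y => y = x0)); auto. intros x ->. left. auto.
      * destruct (Hlim i' Hi') as [j [Hij Hjl]]. exists j. split; auto.
        apply (closure_mono _ (fun y => y = x0)); auto. intros x ->. right. exists i'. auto.
    + intros [i [Hil Ht]]. apply (closure_mono _ (Z i)); auto. apply Zmono. auto.
  - intros i. apply tree_op_closure_finite_adhesion. exists (sq 0). left. eauto.
Qed.

End Filtration.

End NormalTree.

End OrderTree.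

Theorem lemma5p1 (V : Type) (adj : V -> V -> Prop) (U : V -> Prop)
  (T : Type) (le : T -> T -> Prop) (Vt : T -> V -> Prop) :
  simple_graph adj ->
  graph_connected adj ->
  ~ countable_set U ->
  (forall Bs : (V -> Prop) -> Prop,
      branch_sets adj Bs -> rooted_branch_sets U Bs ->
      (forall X, Bs X -> countable_set X) ->
      countable_colouring_number Bs (minor_adj adj)) ->
  order_tree le ->
  normal_semi_partition_tree adj le Vt ->
  slim le Vt ->
  rooted_parts U Vt ->
  (forall u, U u -> parts_union Vt (fun _ => True) u) ->
  exists (K : Type) (ltK : K -> K -> Prop) (I : Type) (ltI : I -> I -> Prop)
         (Ti : I -> T -> Prop),
    initial_ordinal_of ltK (fun _ : T => True) /\
    cofinality_order ltI ltK /\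
    (forall i, rooted_subtree le (Ti i)) /\
    (forall i, ~ finite_set (Ti i)) /\
    (forall i, card_lt (Ti i) (fun _ : T => True)) /\
    (forall i j t, ltI i j -> Ti i t -> Ti j t) /\
    (forall t, exists i, Ti i t) /\
    (forall l, is_limit ltI l -> forall t, Ti l t <-> exists i, ltI i l /\ Ti i t) /\
    (forall i, finite_adhesion_towards adj (parts_union Vt (Ti i)) U).
Proof.
  intros Hsimple _ HU Hminor Htree Hnpt Hslim Hroot HUin.
  destruct (choice (fun t x => Vt t x /\ U x) Hroot) as [xr Hxr].
  destruct (parts_colouring le adj Vt Hnpt U xr Hxr Hminor (fun _ => True)) as [R0 [HR0 HR0fin]].
  { intros s _. apply (part_countable le Htree adj Vt Hsimple Hnpt U xr Hxr Hminor Hslim). }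
  destruct (initial_ordinal_exists T) as [K [ltK HK]].
  destruct (root_le le Htree) as [r _].
  pose proof HK as [WK [[_ [phi _]] _]].
  destruct (cofinality_exists K ltK WK (phi r)) as [I [ltI HI]].
  destruct (filtration_exists le Htree adj Vt Hsimple Hnpt U xr Hxr HUin Hminor Hslim HU
              R0 HR0 HR0fin K ltK I ltI HK HI) as [Ti HTi].
  exists K, ltK, I, ltI, Ti. auto.
Qed.
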